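(* Let $U\subseteq\mathbb{C}$ be open, let $f \in \operatorname{Hol}(U,\mathbb{C}_+)$, and let $y_0 \in U\cap\mathbb{R}$ with $f(y_0) \in \mathbb{C}_+$. Then there exists an open neighbourhood $\Omega$ of $(0, y_0)$ in $\mathbb{R}^2$ on which the equation $\lambda(x,y) = f(y - \lambda(x,y)\,x)$ has a unique $C^1$ solution $\lambda\colon \Omega \to \mathbb{C}_+$.
   Context: $\mathbb{C}_+$ is the upper half-plane and $\operatorname{Hol}(U,\mathbb{C}_+)$ the set of holomorphic functions $U\to\mathbb{C}_+$. *)

From Stdlib Require Import Reals.
From Coquelicot Require Import Coquelicot.
Open Scope R_scope.

Definition upper_half (z : C) : Prop := 0 < Im z.

Definition holomorphic_on (U : C -> Prop) (f : C -> C) : Prop :=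
  forall z : C, U z -> @ex_derive C_AbsRing C_NormedModule f z.

Definition Hol_upper (U : C -> Prop) (f : C -> C) : Prop :=
  holomorphic_on U f /\ forall z, U z -> upper_half (f z).

Definition is_partial_x (lam : R * R -> C) (p : R * R) (d : C) : Prop :=
  @is_derive R_AbsRing C_R_NormedModule (fun t => lam (t, snd p)) (fst p) d.
Definition is_partial_y (lam : R * R -> C) (p : R * R) (d : C) : Prop :=
  @is_derive R_AbsRing C_R_NormedModule (fun t => lam (fst p, t)) (snd p) d.

Definition C1_on (Om : R * R -> Prop) (lam : R * R -> C) : Prop :=
  exists dx dy : R * R -> C,
    forall p, Om p ->
      is_partial_x lam p (dx p) /\ is_partial_y lam p (dy p) /\
      continuous lam p /\
      @continuous _ C_UniformSpace dx p /\ @continuous _ C_UniformSpace dy p.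

Definition solves_on (U : C -> Prop) (f : C -> C) (Om : R * R -> Prop)
  (lam : R * R -> C) : Prop :=
  forall p, Om p ->
    upper_half (lam p) /\
    U (RtoC (snd p) - lam p * RtoC (fst p))%C /\
    lam p = f (RtoC (snd p) - lam p * RtoC (fst p))%C.

(* Goursat's lemma (by repeated quartering
   of rectangles), excision of a small square around a point, and the Cauchy integral formula on
   the square show that f is C^{1,1} near y0: f is Lipschitz, and with G(z) the normalised
   Cauchy integral of f(w)/(w - z)^2 one has |f z' - f z - G z (z' - z)| <= L |z' - z|^2, with G
   bounded and Lipschitz.
   For (x, y) in a small box around (0, y0), la |-> f (y - la x) is then a 1/2-contraction of the
   unit ball around f y0 into itself; its fixed point lam(x, y) solves the equation, and the same
   bounds make lam Lipschitz with the partial derivatives given by implicit differentiation,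
   which are continuous.  A continuous solution equals f y, close to f y0, at x = 0 and by the
   intermediate value theorem cannot leave the ball on which the fixed point is unique. *)

From Stdlib Require Import Reals Lra Lia Classical IndefiniteDescription.
From Coquelicot Require Import Coquelicot.
Open Scope R_scope.

Lemma Cmod_norm_R (z : C) : @norm R_AbsRing C_R_NormedModule z = Cmod z.
Proof.
  destruct z as [x y]. unfold norm; simpl. unfold prod_norm, Cmod; simpl.
  unfold norm; simpl. unfold abs; simpl.
  rewrite !Rmult_1_r, <- !Rabs_mult, !Rabs_right by nra. reflexivity.
Qed.

Lemma Rabs_fst_le_Cmod (z : C) : Rabs (fst z) <= Cmod z.
Proof. eapply Rle_trans; [apply Rmax_l | apply Rmax_Cmod]. Qed.

Lemma Rabs_snd_le_Cmod (z : C) : Rabs (snd z) <= Cmod z.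
Proof. eapply Rle_trans; [apply Rmax_r | apply Rmax_Cmod]. Qed.

Lemma Cmod_le_Rabs_sum (z : C) : Cmod z <= Rabs (fst z) + Rabs (snd z).
Proof.
  destruct z as [x y]. simpl. rewrite <- (Cmod_R x), <- (Cmod_R y).
  replace (x, y) with (RtoC x + Ci * RtoC y)%C
    by (unfold RtoC, Ci, Cplus, Cmult; simpl; f_equal; ring).
  eapply Rle_trans; [apply Cmod_triangle |].
  rewrite Cmod_mult, Cmod_Ci. lra.
Qed.

Lemma Cmod_sub_sym (a b : C) : Cmod (a - b)%C = Cmod (b - a)%C.
Proof. rewrite <- Cmod_opp. f_equal. ring. Qed.

Lemma Cmod_sub_le (a b : C) : Cmod (a - b)%C <= Cmod a + Cmod b.
Proof. eapply Rle_trans; [apply Cmod_triangle |]. rewrite Cmod_opp. lra. Qed.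

Lemma Cmod_sub_ge (a b : C) : Cmod a - Cmod b <= Cmod (a - b)%C.
Proof. generalize (Cmod_triangle (a - b)%C b). replace (a - b + b)%C with a by ring. lra. Qed.

Lemma Rabs_Cmod_sub_le (a b : C) : Rabs (Cmod a - Cmod b) <= Cmod (a - b)%C.
Proof.
  apply Rabs_le. generalize (Cmod_sub_ge a b) (Cmod_sub_ge b a).
  rewrite (Cmod_sub_sym b a). lra.
Qed.

Lemma Cmod_triangle3 (a b c : C) : Cmod (a + b + c)%C <= Cmod a + Cmod b + Cmod c.
Proof. eapply Rle_trans; [apply Cmod_triangle |]. generalize (Cmod_triangle a b). lra. Qed.

Lemma Cmod_sub_pos_iff (a b : C) : 0 < Cmod (a - b)%C <-> a <> b.
Proof. rewrite <- Cmod_gt_0. split; intros H E; apply H; [rewrite E; ring | apply Ceq_minus, E]. Qed.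

Lemma Cminus_neq0 (a b : C) : a <> b -> (a - b)%C <> 0%C.
Proof. intros H E. apply H, Ceq_minus, E. Qed.

Lemma fst_Cminus (a b : C) : fst (a - b)%C = fst a - fst b.
Proof. destruct a, b. simpl. ring. Qed.

Lemma snd_Cminus (a b : C) : snd (a - b)%C = snd a - snd b.
Proof. destruct a, b. simpl. ring. Qed.

Lemma Cmod_sub_le_Rabs_sum (a b : C) :
  Cmod (a - b)%C <= Rabs (fst a - fst b) + Rabs (snd a - snd b).
Proof. rewrite <- fst_Cminus, <- snd_Cminus. apply Cmod_le_Rabs_sum. Qed.

Lemma Rle_of_le_eps (x a : R) : (forall eps, 0 < eps -> x <= a + eps) -> x <= a.
Proof. intros H. apply Rnot_lt_le. intros Hl. specialize (H ((x - a) / 2) ltac:(lra)). lra. Qed.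

Lemma C_eq0_of_le_eps (z : C) : (forall eps, 0 < eps -> Cmod z <= eps) -> z = 0%C.
Proof.
  intros H. apply Cmod_eq_0, Rle_antisym; [| apply Cmod_ge_0].
  apply Rle_of_le_eps. intros eps He. rewrite Rplus_0_l. auto.
Qed.

Lemma continuous_C_iff {T : UniformSpace} (phi : T -> C) (x : T) :
  @continuous T C_UniformSpace phi x <->
  forall eps, 0 < eps -> locally x (fun y => Cmod (phi y - phi x)%C < eps).
Proof.
  unfold continuous. rewrite (@filterlim_locally_ball_norm _ _ C_NormedModule).
  - split.
    + intros H eps He. exact (H (mkposreal eps He)).
    + intros H eps. exact (H eps (cond_pos eps)).
  - apply locally_filter.
Qed.

Lemma locally_R2_iff (p : R * R) (P : R * R -> Prop) :
  locally p P <-> exists r, 0 < r /\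
    forall q, Rabs (fst q - fst p) < r -> Rabs (snd q - snd p) < r -> P q.
Proof.
  split.
  - intros [r H]. exists r. split; [apply cond_pos |]. intros q H1 H2. apply H. split; assumption.
  - intros [r [Hr H]]. exists (mkposreal r Hr). intros q [H1 H2]. apply H; assumption.
Qed.

(** * Complex differentiability *)

Definition Ccontinuous (g : C -> C) (z : C) : Prop :=
  forall eps, 0 < eps -> exists del, 0 < del /\
    forall w, Cmod (w - z)%C < del -> Cmod (g w - g z)%C < eps.

Definition is_Cderive (g : C -> C) (z l : C) : Prop :=
  forall eps, 0 < eps -> exists del, 0 < del /\
    forall w, Cmod (w - z)%C < del ->
      Cmod (g w - g z - l * (w - z))%C <= eps * Cmod (w - z)%C.

Lemma is_Cderive_of_ex_derive (g : C -> C) (z : C) :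
  @ex_derive C_AbsRing C_NormedModule g z -> exists l, is_Cderive g z l.
Proof.
  intros [l [_ Hd]]. exists l. intros eps Heps.
  assert (Hz : @is_filter_lim (AbsRing_NormedModule C_AbsRing)
                 (@locally (AbsRing_UniformSpace C_AbsRing) z) z) by (intros P HP; exact HP).
  destruct (Hd z Hz (mkposreal eps Heps)) as [d Hw].
  exists d. split; [apply cond_pos |]. intros w Hwz. specialize (Hw w Hwz). simpl in Hw.
  unfold norm, minus, plus, opp, scal, mult in Hw; simpl in Hw. unfold abs in Hw; simpl in Hw.
  eapply Rle_trans; [| exact Hw]. right. f_equal. unfold mult; simpl. ring.
Qed.

Lemma is_Cderive_continuous (g : C -> C) (z l : C) : is_Cderive g z l -> Ccontinuous g z.
Proof.
  intros H eps Heps. destruct (H 1 Rlt_0_1) as [d [Hd Hw]].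
  generalize (Cmod_ge_0 l); intro Hl.
  exists (Rmin d (eps / (Cmod l + 2))). split.
  { apply Rmin_pos; [lra | apply Rdiv_lt_0_compat; lra]. }
  intros w Hwz. set (e := Cmod (w - z)%C) in *.
  assert (He : 0 <= e) by apply Cmod_ge_0.
  assert (H1 : e < d) by exact (Rlt_le_trans _ _ _ Hwz (Rmin_l _ _)).
  assert (H2 : e * (Cmod l + 2) < eps).
  { apply (Rmult_lt_reg_r (/ (Cmod l + 2))); [apply Rinv_0_lt_compat; lra |].
    rewrite Rmult_assoc, Rinv_r, Rmult_1_r by lra. exact (Rlt_le_trans _ _ _ Hwz (Rmin_r _ _)). }
  specialize (Hw w H1). fold e in Hw.
  replace (g w - g z)%C with ((g w - g z - l * (w - z)) + l * (w - z))%C by ring.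
  eapply Rle_lt_trans; [apply Cmod_triangle |]. rewrite Cmod_mult. fold e. nra.
Qed.

Lemma is_Cderive_const (k z : C) : is_Cderive (fun _ => k) z 0.
Proof.
  intros eps Heps. exists 1. split; [lra |]. intros w _.
  replace (k - k - 0 * (w - z))%C with (RtoC 0) by ring. rewrite Cmod_0.
  generalize (Cmod_ge_0 (w - z)%C). nra.
Qed.

Lemma is_Cderive_plus (g1 g2 : C -> C) (z l1 l2 : C) :
  is_Cderive g1 z l1 -> is_Cderive g2 z l2 ->
  is_Cderive (fun w => g1 w + g2 w)%C z (l1 + l2)%C.
Proof.
  intros H1 H2 eps Heps.
  destruct (H1 (eps / 2)) as [d1 [Hd1 K1]]; [lra |].
  destruct (H2 (eps / 2)) as [d2 [Hd2 K2]]; [lra |].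
  exists (Rmin d1 d2). split; [apply Rmin_pos; lra |]. intros w Hw.
  specialize (K1 w (Rlt_le_trans _ _ _ Hw (Rmin_l _ _))).
  specialize (K2 w (Rlt_le_trans _ _ _ Hw (Rmin_r _ _))).
  replace (g1 w + g2 w - (g1 z + g2 z) - (l1 + l2) * (w - z))%C
    with ((g1 w - g1 z - l1 * (w - z)) + (g2 w - g2 z - l2 * (w - z)))%C by ring.
  eapply Rle_trans; [apply Cmod_triangle | lra].
Qed.

Lemma is_Cderive_mult (g1 g2 : C -> C) (z l1 l2 : C) :
  is_Cderive g1 z l1 -> is_Cderive g2 z l2 ->
  is_Cderive (fun w => g1 w * g2 w)%C z (l1 * g2 z + g1 z * l2)%C.
Proof.
  intros H1 H2 eps Heps.
  generalize (Cmod_ge_0 l1) (Cmod_ge_0 (g1 z)) (Cmod_ge_0 (g2 z)); intros P1 P2 P3.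
  set (M := Cmod l1 + Cmod (g1 z) + Cmod (g2 z) + 1).
  set (eta := Rmin 1 (eps / (3 * M))).
  assert (Heta : 0 < eta) by (apply Rmin_pos; [lra | apply Rdiv_lt_0_compat; unfold M; lra]).
  assert (HetaM : 3 * (eta * M) <= eps).
  { apply Rle_trans with (3 * (eps / (3 * M) * M)).
    - apply Rmult_le_compat_l; [lra |]. apply Rmult_le_compat_r; [unfold M; lra | apply Rmin_r].
    - right. field. unfold M; lra. }
  destruct (is_Cderive_continuous _ _ _ H2 eta Heta) as [d0 [Hd0 K0]].
  destruct (H1 eta Heta) as [d1 [Hd1 K1]].
  destruct (H2 eta Heta) as [d2 [Hd2 K2]].
  exists (Rmin d0 (Rmin d1 d2)). split; [repeat apply Rmin_pos; lra |]. intros w Hw.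
  specialize (K0 w (Rlt_le_trans _ _ _ Hw (Rmin_l _ _))).
  specialize (K1 w (Rlt_le_trans _ _ _ Hw (Rle_trans _ _ _ (Rmin_r _ _) (Rmin_l _ _)))).
  specialize (K2 w (Rlt_le_trans _ _ _ Hw (Rle_trans _ _ _ (Rmin_r _ _) (Rmin_r _ _)))).
  replace (g1 w * g2 w - g1 z * g2 z - (l1 * g2 z + g1 z * l2) * (w - z))%C with
    ((g1 w - g1 z - l1 * (w - z)) * g2 w + l1 * (w - z) * (g2 w - g2 z)
     + g1 z * (g2 w - g2 z - l2 * (w - z)))%C by ring.
  eapply Rle_trans; [apply Cmod_triangle3 |]. rewrite !Cmod_mult.
  set (e := Cmod (w - z)%C) in *. assert (He : 0 <= e) by apply Cmod_ge_0.
  assert (Hg2 : Cmod (g2 w) <= M).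
  { assert (eta <= 1) by apply Rmin_l. generalize (Cmod_sub_ge (g2 w) (g2 z)). unfold M. lra. }
  generalize (Cmod_ge_0 (g2 w)) (Cmod_ge_0 (g2 w - g2 z)%C)
    (Cmod_ge_0 (g1 w - g1 z - l1 * (w - z))%C) (Cmod_ge_0 (g2 w - g2 z - l2 * (w - z))%C).
  intros Q1 Q2 Q3 Q4.
  assert (A1 : Cmod (g1 w - g1 z - l1 * (w - z))%C * Cmod (g2 w) <= eta * M * e).
  { replace (eta * M * e) with (eta * e * M) by ring. apply Rmult_le_compat; assumption. }
  assert (A2 : Cmod l1 * e * Cmod (g2 w - g2 z)%C <= eta * M * e).
  { replace (eta * M * e) with (M * e * eta) by ring.
    apply Rmult_le_compat; [nra | lra | apply Rmult_le_compat_r; unfold M; lra | lra]. }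
  assert (A3 : Cmod (g1 z) * Cmod (g2 w - g2 z - l2 * (w - z))%C <= eta * M * e).
  { replace (eta * M * e) with (M * (eta * e)) by ring.
    apply Rmult_le_compat; [lra | lra | unfold M; lra | exact K2]. }
  nra.
Qed.

Lemma is_Cderive_inv_sub (z0 z : C) : z <> z0 ->
  is_Cderive (fun w => / (w - z0))%C z (- / ((z - z0) * (z - z0)))%C.
Proof.
  intros Hz eps Heps. cbv beta.
  set (u := (z - z0)%C).
  assert (Pu : 0 < Cmod u) by (apply Cmod_sub_pos_iff, Hz).
  assert (Hu : u <> 0%C) by (apply Cmod_gt_0, Pu).
  exists (Rmin (Cmod u / 2) (eps * Cmod u ^ 3 / 2)). split.
  { apply Rmin_pos; [lra |]. apply Rdiv_lt_0_compat; [| lra].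
    apply Rmult_lt_0_compat; [lra | apply pow_lt; lra]. }
  intros w Hw. set (v := (w - z0)%C). set (e := Cmod (w - z)%C) in *.
  assert (He : 0 <= e) by apply Cmod_ge_0.
  assert (H1 : e < Cmod u / 2) by exact (Rlt_le_trans _ _ _ Hw (Rmin_l _ _)).
  assert (H2 : e <= eps * Cmod u ^ 3 / 2) by exact (Rlt_le _ _ (Rlt_le_trans _ _ _ Hw (Rmin_r _ _))).
  assert (Hv : Cmod u / 2 <= Cmod v).
  { generalize (Cmod_sub_ge u (z - w)%C). replace (u - (z - w))%C with v by (unfold u, v; ring).
    rewrite (Cmod_sub_sym z w). fold e. lra. }
  assert (Hv0 : v <> 0%C) by (intro E; rewrite E, Cmod_0 in Hv; lra).
  replace (/ v - / u - - / (u * u) * (w - z))%C with ((w - z) * (w - z) / (u * u * v))%C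
    by (replace (w - z)%C with (v - u)%C by (unfold u, v; ring); field; auto).
  rewrite Cmod_div, !Cmod_mult by (repeat apply Cmult_neq_0; auto). fold e.
  apply Rle_trans with (e * e / (Cmod u ^ 3 / 2)).
  - unfold Rdiv. apply Rmult_le_compat_l; [nra |]. apply Rinv_le_contravar.
    + apply Rmult_lt_0_compat; [apply pow_lt | apply Rinv_0_lt_compat]; lra.
    + replace (Cmod u ^ 3 * / 2) with (Cmod u * Cmod u * (Cmod u / 2)) by (simpl; field).
      apply Rmult_le_compat_l; nra.
  - assert (P3 : 0 < Cmod u ^ 3) by (apply pow_lt; lra).
    apply Rle_trans with (e * (eps * Cmod u ^ 3 / 2) / (Cmod u ^ 3 / 2)).
    + unfold Rdiv. apply Rmult_le_compat_r; [apply Rlt_le, Rinv_0_lt_compat; lra |].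
      apply Rmult_le_compat_l; lra.
    + right. field. lra.
Qed.

(** * Integrals along the boundary of a rectangle *)

Definition CInt (phi : R -> C) (a b : R) : C := @RInt C_R_CompleteNormedModule phi a b.
Definition ex_CInt (phi : R -> C) (a b : R) : Prop := @ex_RInt C_R_NormedModule phi a b.

Lemma CInt_correct phi a b : ex_CInt phi a b -> @is_RInt C_R_NormedModule phi a b (CInt phi a b).
Proof. exact (@RInt_correct C_R_CompleteNormedModule phi a b). Qed.

Lemma CInt_unique phi a b I : @is_RInt C_R_NormedModule phi a b I -> CInt phi a b = I.
Proof. exact (@is_RInt_unique C_R_CompleteNormedModule phi a b I). Qed.

Lemma is_RInt_Cmult_l (phi : R -> C) (a b : R) (I k : C) :
  @is_RInt C_R_NormedModule phi a b I ->
  @is_RInt C_R_NormedModule (fun t => k * phi t)%C a b (k * I)%C.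
Proof.
  intros H.
  assert (H1 := @is_RInt_fct_extend_fst R_NormedModule R_NormedModule phi a b I H).
  assert (H2 := @is_RInt_fct_extend_snd R_NormedModule R_NormedModule phi a b I H).
  destruct k as [k1 k2].
  apply (@is_RInt_fct_extend_pair R_NormedModule R_NormedModule); simpl.
  - eapply is_RInt_ext;
      [| apply (is_RInt_minus _ _ _ _ _ _ (is_RInt_scal _ _ _ k1 _ H1) (is_RInt_scal _ _ _ k2 _ H2))].
    intros t _. unfold minus, plus, opp, scal; simpl. unfold mult; simpl. ring.
  - eapply is_RInt_ext;
      [| apply (is_RInt_plus _ _ _ _ _ _ (is_RInt_scal _ _ _ k1 _ H2) (is_RInt_scal _ _ _ k2 _ H1))].
    intros t _. unfold minus, plus, opp, scal; simpl. unfold mult; simpl. ring.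
Qed.

Lemma ex_CInt_Cmult_l phi a b k : ex_CInt phi a b -> ex_CInt (fun t => k * phi t)%C a b.
Proof. intros H. eexists. apply is_RInt_Cmult_l, CInt_correct, H. Qed.

Lemma CInt_Cmult_l phi a b k :
  ex_CInt phi a b -> CInt (fun t => k * phi t)%C a b = (k * CInt phi a b)%C.
Proof. intros H. apply CInt_unique, is_RInt_Cmult_l, CInt_correct, H. Qed.

Lemma ex_CInt_plus phi psi a b :
  ex_CInt phi a b -> ex_CInt psi a b -> ex_CInt (fun t => phi t + psi t)%C a b.
Proof. exact (@ex_RInt_plus C_R_NormedModule phi psi a b). Qed.

Lemma CInt_plus phi psi a b : ex_CInt phi a b -> ex_CInt psi a b ->
  CInt (fun t => phi t + psi t)%C a b = (CInt phi a b + CInt psi a b)%C.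
Proof.
  intros H1 H2. apply CInt_unique.
  exact (@is_RInt_plus C_R_NormedModule _ _ _ _ _ _ (CInt_correct _ _ _ H1) (CInt_correct _ _ _ H2)).
Qed.

Lemma ex_CInt_minus phi psi a b :
  ex_CInt phi a b -> ex_CInt psi a b -> ex_CInt (fun t => phi t - psi t)%C a b.
Proof. exact (@ex_RInt_minus C_R_NormedModule phi psi a b). Qed.

Lemma CInt_minus phi psi a b : ex_CInt phi a b -> ex_CInt psi a b ->
  CInt (fun t => phi t - psi t)%C a b = (CInt phi a b - CInt psi a b)%C.
Proof.
  intros H1 H2. apply CInt_unique.
  exact (@is_RInt_minus C_R_NormedModule _ _ _ _ _ _ (CInt_correct _ _ _ H1) (CInt_correct _ _ _ H2)).
Qed.

Lemma ex_CInt_ext phi psi a b : (forall t, Rmin a b < t < Rmax a b -> phi t = psi t) ->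
  ex_CInt phi a b -> ex_CInt psi a b.
Proof. exact (@ex_RInt_ext C_R_NormedModule phi psi a b). Qed.

Lemma CInt_ext phi psi a b : (forall t, Rmin a b < t < Rmax a b -> phi t = psi t) ->
  CInt phi a b = CInt psi a b.
Proof. exact (@RInt_ext C_R_CompleteNormedModule phi psi a b). Qed.

Lemma CInt_Chasles phi a m b : ex_CInt phi a m -> ex_CInt phi m b ->
  CInt phi a b = (CInt phi a m + CInt phi m b)%C.
Proof.
  intros H1 H2. apply CInt_unique.
  exact (@is_RInt_Chasles C_R_NormedModule _ _ _ _ _ _ (CInt_correct _ _ _ H1) (CInt_correct _ _ _ H2)).
Qed.

Lemma CInt_norm_le phi a b M : a <= b -> ex_CInt phi a b ->
  (forall t, a <= t <= b -> Cmod (phi t) <= M) -> Cmod (CInt phi a b) <= (b - a) * M.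
Proof.
  intros Hab H HM. rewrite <- Cmod_norm_R.
  apply (@norm_RInt_le_const C_R_NormedModule phi a b); [exact Hab | | apply CInt_correct, H].
  intros t Ht. rewrite Cmod_norm_R. apply HM, Ht.
Qed.

Lemma CInt_const (k : C) a b : CInt (fun _ => k) a b = ((b - a) * k)%C.
Proof.
  apply CInt_unique.
  replace ((b - a) * k)%C with (@scal R_AbsRing C_R_NormedModule (b - a) k);
    [apply (@is_RInt_const C_R_NormedModule) |].
  destruct k as [k1 k2]. unfold scal; simpl. unfold prod_scal, scal; simpl. unfold mult; simpl.
  unfold Cmult, RtoC; simpl. f_equal; ring.
Qed.

Lemma CInt_fst phi a b : ex_CInt phi a b -> fst (CInt phi a b) = RInt (fun t => fst (phi t)) a b.
Proof.
  intros H. symmetry. apply is_RInt_unique.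
  exact (@is_RInt_fct_extend_fst R_NormedModule R_NormedModule phi a b _ (CInt_correct _ _ _ H)).
Qed.

Lemma CInt_snd phi a b : ex_CInt phi a b -> snd (CInt phi a b) = RInt (fun t => snd (phi t)) a b.
Proof.
  intros H. symmetry. apply is_RInt_unique.
  exact (@is_RInt_fct_extend_snd R_NormedModule R_NormedModule phi a b _ (CInt_correct _ _ _ H)).
Qed.

Lemma CInt_shift (phi : R -> C) (a b v : R) : ex_CInt phi (a + v) (b + v) ->
  CInt phi (a + v) (b + v) = CInt (fun t => phi (t + v)) a b.
Proof.
  intros H. unfold CInt.
  assert (E := @RInt_comp_lin C_R_CompleteNormedModule phi 1 v a b).
  rewrite !Rmult_1_l in E. rewrite <- E by exact H.
  apply (@RInt_ext C_R_CompleteNormedModule). intros t _. rewrite Rmult_1_l. exact (scal_one _).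
Qed.

Lemma ex_CInt_isometric_path (h : C -> C) (gam : R -> C) (a b : R) : a <= b ->
  (forall s t, Cmod (gam s - gam t)%C = Rabs (s - t)) ->
  (forall t, a <= t <= b -> Ccontinuous h (gam t)) -> ex_CInt (fun t => h (gam t)) a b.
Proof.
  intros Hab Hgam H. apply (@ex_RInt_continuous C_R_CompleteNormedModule). intros t Ht.
  rewrite Rmin_left, Rmax_right in Ht by lra.
  apply (continuous_C_iff (T := R_UniformSpace)). intros eps Heps.
  destruct (H t Ht eps Heps) as [d [Hd K]]. exists (mkposreal d Hd).
  intros s Hs. apply K. rewrite Hgam. exact Hs.
Qed.

Lemma Cmod_sub_pair_l (s t y : R) : Cmod ((s, y) - (t, y))%C = Rabs (s - t).
Proof. rewrite <- Cmod_R. f_equal. unfold Cminus, Cplus, Copp, RtoC; simpl. f_equal; ring. Qed.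

Lemma Cmod_sub_pair_r (s t x : R) : Cmod ((x, s) - (x, t))%C = Rabs (s - t).
Proof.
  replace ((x, s) - (x, t))%C with (Ci * RtoC (s - t))%C
    by (unfold Ci, RtoC, Cminus, Cplus, Copp, Cmult; simpl; f_equal; ring).
  rewrite Cmod_mult, Cmod_Ci, Cmod_R. ring.
Qed.

Lemma is_RInt_id (a b : R) : is_RInt (fun t => t) a b ((b * b - a * a) / 2).
Proof.
  replace ((b * b - a * a) / 2) with (minus (b * b / 2) (a * a / 2))
    by (unfold minus, plus, opp; simpl; field).
  apply (is_RInt_derive (fun t => t * t / 2) (fun t => t)).
  - intros x _. auto_derive; [auto | field].
  - intros x _. apply continuous_id.
Qed.

Lemma is_RInt_const_R (y a b : R) : is_RInt (fun _ => y) a b (y * (b - a)).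
Proof.
  replace (y * (b - a)) with (scal (b - a) y) by (unfold scal; simpl; unfold mult; simpl; ring).
  apply (@is_RInt_const R_NormedModule).
Qed.

Lemma is_RInt_pair_l (y a b : R) :
  @is_RInt C_R_NormedModule (fun t => (t, y) : C) a b ((b * b - a * a) / 2, y * (b - a)).
Proof.
  apply (@is_RInt_fct_extend_pair R_NormedModule R_NormedModule); simpl.
  - apply is_RInt_id.
  - apply is_RInt_const_R.
Qed.

Lemma is_RInt_pair_r (x c d : R) :
  @is_RInt C_R_NormedModule (fun t => (x, t) : C) c d (x * (d - c), (d * d - c * c) / 2).
Proof.
  apply (@is_RInt_fct_extend_pair R_NormedModule R_NormedModule); simpl.
  - apply is_RInt_const_R.
  - apply is_RInt_id.
Qed.

Definition in_rect (a b c d : R) (z : C) : Prop := a <= fst z <= b /\ c <= snd z <= d.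

Definition on_rect_boundary (a b c d : R) (z : C) : Prop :=
  in_rect a b c d z /\ (fst z = a \/ fst z = b \/ snd z = c \/ snd z = d).

(* Counterclockwise along the boundary of [a,b] x [c,d]; [dz = i dt] on the vertical sides. *)
Definition rect_integral (h : C -> C) (a b c d : R) : C :=
  (CInt (fun t => h (t, c)) a b + Ci * CInt (fun t => h (b, t)) c d
   - CInt (fun t => h (t, d)) a b - Ci * CInt (fun t => h (a, t)) c d)%C.

Definition ex_rect_integral (h : C -> C) (a b c d : R) : Prop :=
  ex_CInt (fun t => h (t, c)) a b /\ ex_CInt (fun t => h (t, d)) a b /\
  ex_CInt (fun t => h (a, t)) c d /\ ex_CInt (fun t => h (b, t)) c d.

Lemma ex_rect_integral_continuous h a b c d : a <= b -> c <= d ->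
  (forall z, on_rect_boundary a b c d z -> Ccontinuous h z) -> ex_rect_integral h a b c d.
Proof.
  intros Hab Hcd H. unfold on_rect_boundary, in_rect in H.
  repeat split; apply (ex_CInt_isometric_path h); try assumption;
    try (intros s t; apply Cmod_sub_pair_l); try (intros s t; apply Cmod_sub_pair_r);
    (intros t Ht; apply H; simpl; split; [split; lra | tauto]).
Qed.

Lemma ex_rect_integral_plus h1 h2 a b c d : ex_rect_integral h1 a b c d ->
  ex_rect_integral h2 a b c d -> ex_rect_integral (fun z => h1 z + h2 z)%C a b c d.
Proof. intros (A1 & A2 & A3 & A4) (B1 & B2 & B3 & B4). repeat split; apply ex_CInt_plus; assumption. Qed.

Lemma ex_rect_integral_minus h1 h2 a b c d : ex_rect_integral h1 a b c d ->
  ex_rect_integral h2 a b c d -> ex_rect_integral (fun z => h1 z - h2 z)%C a b c d.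
Proof. intros (A1 & A2 & A3 & A4) (B1 & B2 & B3 & B4). repeat split; apply ex_CInt_minus; assumption. Qed.

Lemma ex_rect_integral_Cmult_l h k a b c d :
  ex_rect_integral h a b c d -> ex_rect_integral (fun z => k * h z)%C a b c d.
Proof. intros (A1 & A2 & A3 & A4). repeat split; apply ex_CInt_Cmult_l; assumption. Qed.

Lemma rect_integral_plus h1 h2 a b c d : ex_rect_integral h1 a b c d -> ex_rect_integral h2 a b c d ->
  rect_integral (fun z => h1 z + h2 z)%C a b c d = (rect_integral h1 a b c d + rect_integral h2 a b c d)%C.
Proof.
  intros (A1 & A2 & A3 & A4) (B1 & B2 & B3 & B4). unfold rect_integral.
  rewrite !CInt_plus by assumption. ring.
Qed.

Lemma rect_integral_minus h1 h2 a b c d : ex_rect_integral h1 a b c d -> ex_rect_integral h2 a b c d ->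
  rect_integral (fun z => h1 z - h2 z)%C a b c d = (rect_integral h1 a b c d - rect_integral h2 a b c d)%C.
Proof.
  intros (A1 & A2 & A3 & A4) (B1 & B2 & B3 & B4). unfold rect_integral.
  rewrite !CInt_minus by assumption. ring.
Qed.

Lemma rect_integral_Cmult_l h k a b c d : ex_rect_integral h a b c d ->
  rect_integral (fun z => k * h z)%C a b c d = (k * rect_integral h a b c d)%C.
Proof. intros (A1 & A2 & A3 & A4). unfold rect_integral. rewrite !CInt_Cmult_l by assumption. ring. Qed.

Lemma rect_integral_ext h1 h2 a b c d : a <= b -> c <= d ->
  (forall z, on_rect_boundary a b c d z -> h1 z = h2 z) ->
  rect_integral h1 a b c d = rect_integral h2 a b c d.
Proof.
  intros Hab Hcd E. unfold rect_integral, on_rect_boundary, in_rect in *.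
  rewrite (CInt_ext (fun t => h1 (t, c)) (fun t => h2 (t, c))),
    (CInt_ext (fun t => h1 (t, d)) (fun t => h2 (t, d))),
    (CInt_ext (fun t => h1 (a, t)) (fun t => h2 (a, t))),
    (CInt_ext (fun t => h1 (b, t)) (fun t => h2 (b, t))); [reflexivity | ..];
  (intros t Ht; rewrite ?Rmin_left, ?Rmax_right in Ht by lra;
   apply E; simpl; split; [split; lra | tauto]).
Qed.

Lemma ex_rect_integral_ext h1 h2 a b c d : a <= b -> c <= d ->
  (forall z, on_rect_boundary a b c d z -> h1 z = h2 z) ->
  ex_rect_integral h1 a b c d -> ex_rect_integral h2 a b c d.
Proof.
  intros Hab Hcd E (A1 & A2 & A3 & A4). unfold on_rect_boundary, in_rect in *.
  split; [| split; [| split]];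
  [ eapply ex_CInt_ext; [| exact A1] | eapply ex_CInt_ext; [| exact A2]
  | eapply ex_CInt_ext; [| exact A3] | eapply ex_CInt_ext; [| exact A4] ];
  (intros t Ht; rewrite ?Rmin_left, ?Rmax_right in Ht by lra;
   apply E; simpl; split; [split; lra | tauto]).
Qed.

Lemma rect_integral_norm_le h a b c d M : a <= b -> c <= d -> ex_rect_integral h a b c d ->
  (forall z, on_rect_boundary a b c d z -> Cmod (h z) <= M) ->
  Cmod (rect_integral h a b c d) <= 2 * ((b - a) + (d - c)) * M.
Proof.
  intros Hab Hcd (A1 & A2 & A3 & A4) HM. unfold on_rect_boundary, in_rect in HM.
  assert (B1 : Cmod (CInt (fun t => h (t, c)) a b) <= (b - a) * M).
  { apply CInt_norm_le; auto. intros t Ht. apply HM. simpl. split; [split; lra | tauto]. }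
  assert (B2 : Cmod (CInt (fun t => h (t, d)) a b) <= (b - a) * M).
  { apply CInt_norm_le; auto. intros t Ht. apply HM. simpl. split; [split; lra | tauto]. }
  assert (B3 : Cmod (CInt (fun t => h (a, t)) c d) <= (d - c) * M).
  { apply CInt_norm_le; auto. intros t Ht. apply HM. simpl. split; [split; lra | tauto]. }
  assert (B4 : Cmod (CInt (fun t => h (b, t)) c d) <= (d - c) * M).
  { apply CInt_norm_le; auto. intros t Ht. apply HM. simpl. split; [split; lra | tauto]. }
  unfold rect_integral, Cminus.
  eapply Rle_trans; [apply Cmod_triangle |]. rewrite Cmod_opp, Cmod_mult, Cmod_Ci.
  eapply Rle_trans; [apply Rplus_le_compat_r, Cmod_triangle |]. rewrite Cmod_opp.
  eapply Rle_trans; [apply Rplus_le_compat_r, Rplus_le_compat_r, Cmod_triangle |].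
  rewrite Cmod_mult, Cmod_Ci. lra.
Qed.

Lemma rect_integral_split_x h a m b c d :
  ex_CInt (fun t => h (t, c)) a m -> ex_CInt (fun t => h (t, c)) m b ->
  ex_CInt (fun t => h (t, d)) a m -> ex_CInt (fun t => h (t, d)) m b ->
  rect_integral h a b c d = (rect_integral h a m c d + rect_integral h m b c d)%C.
Proof.
  intros H1 H2 H3 H4. unfold rect_integral.
  rewrite (CInt_Chasles _ a m b H1 H2), (CInt_Chasles _ a m b H3 H4). ring.
Qed.

Lemma rect_integral_split_y h a b c m d :
  ex_CInt (fun t => h (a, t)) c m -> ex_CInt (fun t => h (a, t)) m d ->
  ex_CInt (fun t => h (b, t)) c m -> ex_CInt (fun t => h (b, t)) m d ->
  rect_integral h a b c d = (rect_integral h a b c m + rect_integral h a b m d)%C.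
Proof.
  intros H1 H2 H3 H4. unfold rect_integral.
  rewrite (CInt_Chasles _ c m d H1 H2), (CInt_Chasles _ c m d H3 H4). ring.
Qed.

Lemma ex_rect_integral_const k a b c d : ex_rect_integral (fun _ => k) a b c d.
Proof. repeat split; eexists; apply (@is_RInt_const C_R_NormedModule). Qed.

Lemma ex_rect_integral_id a b c d : ex_rect_integral (fun z => z) a b c d.
Proof.
  repeat split; eexists;
    [apply is_RInt_pair_l | apply is_RInt_pair_l | apply is_RInt_pair_r | apply is_RInt_pair_r].
Qed.

Lemma rect_integral_affine (al be : C) a b c d : rect_integral (fun z => al + be * z)%C a b c d = 0%C.
Proof.
  rewrite (rect_integral_plus (fun _ => al) (fun z => be * z)%C), (rect_integral_Cmult_l (fun z => z));
    [| apply ex_rect_integral_id | apply ex_rect_integral_const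
     | apply ex_rect_integral_Cmult_l, ex_rect_integral_id].
  unfold rect_integral. rewrite !CInt_const, !(CInt_unique _ _ _ _ (is_RInt_pair_l _ _ _)),
    !(CInt_unique _ _ _ _ (is_RInt_pair_r _ _ _)).
  unfold Cminus, Cplus, Copp, Cmult, Ci, RtoC; simpl. f_equal; ring.
Qed.

Lemma rect_integral_shift (h k : C -> C) (v : C) (a b c d : R) :
  ex_rect_integral h (a + fst v) (b + fst v) (c + snd v) (d + snd v) ->
  (forall w, h (w + v)%C = k w) ->
  rect_integral h (a + fst v) (b + fst v) (c + snd v) (d + snd v) = rect_integral k a b c d.
Proof.
  intros (A1 & A2 & A3 & A4) Hk. destruct v as [v1 v2]. cbn [fst snd] in *.
  unfold rect_integral.
  rewrite (CInt_shift _ a b v1 A1), (CInt_shift _ a b v1 A2),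
    (CInt_shift _ c d v2 A3), (CInt_shift _ c d v2 A4).
  rewrite (CInt_ext (fun t => h (t + v1, c + v2)) (fun t => k (t, c)) a b),
    (CInt_ext (fun t => h (t + v1, d + v2)) (fun t => k (t, d)) a b),
    (CInt_ext (fun t => h (a + v1, t + v2)) (fun t => k (a, t)) c d),
    (CInt_ext (fun t => h (b + v1, t + v2)) (fun t => k (b, t)) c d); [reflexivity | ..];
  intros t _; rewrite <- Hk; reflexivity.
Qed.

(** * Goursat's theorem and the Cauchy integral formula *)

Lemma half_pow_lt (eps : R) : 0 < eps -> exists N, forall n, (N <= n)%nat -> (/ 2) ^ n < eps.
Proof.
  intros He. destruct (pow_lt_1_zero (/ 2) ltac:(rewrite Rabs_right; lra) eps He) as [N HN].
  exists N. intros n Hn. specialize (HN n Hn). rewrite Rabs_right in HN; [exact HN |].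
  apply Rle_ge, pow_le. lra.
Qed.

Lemma nested_intervals_point (a b : nat -> R) :
  (forall m n, a m <= b n) -> exists x, forall n, a n <= x <= b n.
Proof.
  intros Hab.
  destruct (completeness (fun x => exists n, x = a n)) as [x [Hub Hlub]].
  - exists (b O). intros y [n ->]. apply Hab.
  - exists (a O), O. reflexivity.
  - exists x. intros n. split.
    + apply Hub. exists n. reflexivity.
    + apply Hlub. intros y [m ->]. apply Hab.
Qed.

Lemma rect_integral_near_Cderive (h : C -> C) (z l : C) (eps del a b c d : R) :
  0 <= eps -> a <= b -> c <= d -> ex_rect_integral h a b c d -> in_rect a b c d z ->
  (b - a) + (d - c) < del ->
  (forall w, Cmod (w - z)%C < del -> Cmod (h w - h z - l * (w - z))%C <= eps * Cmod (w - z)%C) ->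
  Cmod (rect_integral h a b c d) <= 2 * eps * ((b - a) + (d - c)) ^ 2.
Proof.
  intros Heps Hab Hcd Hh [[Hz1 Hz2] [Hz3 Hz4]] Hdel Hl.
  set (W := (b - a) + (d - c)) in *.
  assert (Haff : ex_rect_integral (fun w => (h z - l * z) + l * w)%C a b c d)
    by (apply ex_rect_integral_plus;
        [apply ex_rect_integral_const | apply ex_rect_integral_Cmult_l, ex_rect_integral_id]).
  replace (rect_integral h a b c d)
    with (rect_integral (fun w => h w - ((h z - l * z) + l * w))%C a b c d)
    by (rewrite rect_integral_minus, rect_integral_affine by assumption; ring).
  replace (2 * eps * W ^ 2) with (2 * W * (eps * W)) by ring.
  apply rect_integral_norm_le; [assumption | assumption | apply ex_rect_integral_minus; assumption |].
  intros w [[[Hw1 Hw2] [Hw3 Hw4]] _].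
  assert (Hwz : Cmod (w - z)%C <= W).
  { eapply Rle_trans; [apply Cmod_sub_le_Rabs_sum |]. unfold W.
    apply Rplus_le_compat; apply Rabs_le; lra. }
  replace (h w - (h z - l * z + l * w))%C with (h w - h z - l * (w - z))%C by ring.
  eapply Rle_trans; [apply Hl; lra |]. apply Rmult_le_compat_l; assumption.
Qed.

Lemma pow4_half_pow_sq (n : nat) : 4 ^ n * ((/ 2) ^ n * (/ 2) ^ n) = 1.
Proof.
  induction n as [| n IHn]; simpl; [ring |].
  replace (4 * 4 ^ n * (/ 2 * (/ 2) ^ n * (/ 2 * (/ 2) ^ n)))
    with (4 * / 2 * / 2 * (4 ^ n * ((/ 2) ^ n * (/ 2) ^ n))) by ring.
  rewrite IHn. field.
Qed.

Record rect := Rect { rect_a : R; rect_b : R; rect_c : R; rect_d : R }.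

Section Goursat.

Variable h : C -> C.
Variables a0 b0 c0 d0 : R.
Hypothesis Hab : a0 <= b0.
Hypothesis Hcd : c0 <= d0.
Hypothesis Hh : forall z, in_rect a0 b0 c0 d0 z -> exists l, is_Cderive h z l.

Let rint (r : rect) := rect_integral h (rect_a r) (rect_b r) (rect_c r) (rect_d r).

Let inside (r : rect) := a0 <= rect_a r <= rect_b r /\ rect_b r <= b0 /\
  c0 <= rect_c r <= rect_d r /\ rect_d r <= d0.

Lemma goursat_continuous z : in_rect a0 b0 c0 d0 z -> Ccontinuous h z.
Proof. intros H. destruct (Hh z H) as [l Hl]. exact (is_Cderive_continuous _ _ _ Hl). Qed.

Lemma goursat_ex_CInt_x (y a b : R) : c0 <= y <= d0 -> a0 <= a <= b -> b <= b0 ->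
  ex_CInt (fun t => h (t, y)) a b.
Proof.
  intros Hy Ha Hb. apply ex_CInt_isometric_path; [lra | intros; apply Cmod_sub_pair_l |].
  intros t Ht. apply goursat_continuous. unfold in_rect; simpl. split; lra.
Qed.

Lemma goursat_ex_CInt_y (x c d : R) : a0 <= x <= b0 -> c0 <= c <= d -> d <= d0 ->
  ex_CInt (fun t => h (x, t)) c d.
Proof.
  intros Hx Hc Hd. apply ex_CInt_isometric_path; [lra | intros; apply Cmod_sub_pair_r |].
  intros t Ht. apply goursat_continuous. unfold in_rect; simpl. split; lra.
Qed.

Let midx r := (rect_a r + rect_b r) / 2.
Let midy r := (rect_c r + rect_d r) / 2.
Let quarter_sw r := Rect (rect_a r) (midx r) (rect_c r) (midy r).
Let quarter_se r := Rect (midx r) (rect_b r) (rect_c r) (midy r).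
Let quarter_nw r := Rect (rect_a r) (midx r) (midy r) (rect_d r).
Let quarter_ne r := Rect (midx r) (rect_b r) (midy r) (rect_d r).

Lemma rint_quarters r : inside r ->
  rint r = (rint (quarter_sw r) + rint (quarter_se r) + rint (quarter_nw r) + rint (quarter_ne r))%C.
Proof.
  destruct r as [a b c d]. unfold inside, rint, quarter_sw, quarter_se, quarter_nw, quarter_ne, midx, midy.
  cbn [rect_a rect_b rect_c rect_d]. intros (H1 & H2 & H3 & H4).
  set (m := (a + b) / 2). set (n := (c + d) / 2).
  assert (a <= m <= b) by (unfold m; lra). assert (c <= n <= d) by (unfold n; lra).
  rewrite (rect_integral_split_x h a m b c d), (rect_integral_split_y h a m c n d),
    (rect_integral_split_y h m b c n d); [ring | ..];
    lazymatch goal with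
    | |- ex_CInt (fun t => h (t, _)) _ _ => apply goursat_ex_CInt_x; lra
    | |- ex_CInt (fun t => h (_, t)) _ _ => apply goursat_ex_CInt_y; lra
    end.
Qed.

Let worst_quarter (r : rect) : rect :=
  let q := Cmod (rint r) / 4 in
  if Rle_dec q (Cmod (rint (quarter_sw r))) then quarter_sw r else
  if Rle_dec q (Cmod (rint (quarter_se r))) then quarter_se r else
  if Rle_dec q (Cmod (rint (quarter_nw r))) then quarter_nw r else quarter_ne r.

Let halves (r r' : rect) := inside r' /\
  rect_a r <= rect_a r' /\ rect_b r' <= rect_b r /\ rect_c r <= rect_c r' /\ rect_d r' <= rect_d r /\
  rect_b r' - rect_a r' = (rect_b r - rect_a r) / 2 /\ rect_d r' - rect_c r' = (rect_d r - rect_c r) / 2.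

Lemma worst_quarter_spec r : inside r ->
  halves r (worst_quarter r) /\ Cmod (rint r) <= 4 * Cmod (rint (worst_quarter r)).
Proof.
  intros Hr.
  assert (Hq : forall q, q = quarter_sw r \/ q = quarter_se r \/ q = quarter_nw r \/ q = quarter_ne r ->
    halves r q).
  { destruct r as [a b c d]. unfold inside in Hr; cbn [rect_a rect_b rect_c rect_d] in Hr.
    intros q Hq. unfold halves, inside.
    destruct Hq as [-> | [-> | [-> | ->]]];
      unfold quarter_sw, quarter_se, quarter_nw, quarter_ne, midx, midy;
      cbn [rect_a rect_b rect_c rect_d]; repeat split; lra. }
  assert (E := rint_quarters r Hr).
  assert (T : Cmod (rint r) <= Cmod (rint (quarter_sw r)) + Cmod (rint (quarter_se r))
                                + Cmod (rint (quarter_nw r)) + Cmod (rint (quarter_ne r))).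
  { rewrite E. eapply Rle_trans; [apply Cmod_triangle |].
    generalize (Cmod_triangle3 (rint (quarter_sw r)) (rint (quarter_se r)) (rint (quarter_nw r))). lra. }
  unfold worst_quarter.
  destruct (Rle_dec (Cmod (rint r) / 4) (Cmod (rint (quarter_sw r))));
    [split; [apply Hq; now left | lra] |].
  destruct (Rle_dec _ _); [split; [apply Hq; right; now left | lra] |].
  destruct (Rle_dec _ _); [split; [apply Hq; right; right; now left | lra] |].
  split; [apply Hq; right; right; now right | lra].
Qed.

Fixpoint goursat_seq (n : nat) : rect :=
  match n with O => Rect a0 b0 c0 d0 | S k => worst_quarter (goursat_seq k) end.

Lemma goursat_seq_spec n : inside (goursat_seq n) /\
  rect_b (goursat_seq n) - rect_a (goursat_seq n) = (b0 - a0) * (/ 2) ^ n /\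
  rect_d (goursat_seq n) - rect_c (goursat_seq n) = (d0 - c0) * (/ 2) ^ n /\
  Cmod (rect_integral h a0 b0 c0 d0) <= 4 ^ n * Cmod (rint (goursat_seq n)).
Proof.
  induction n as [| n (H1 & H2 & H3 & H4)]; cbn [goursat_seq].
  - unfold inside, rint; cbn [rect_a rect_b rect_c rect_d pow]. repeat split; lra.
  - destruct (worst_quarter_spec _ H1) as ((K1 & _ & _ & _ & _ & K6 & K7) & K8).
    split; [exact K1 |]. simpl. split; [lra | split; [lra |]].
    assert (0 < 4 ^ n) by (apply pow_lt; lra). nra.
Qed.

Lemma goursat_seq_mono n k :
  rect_a (goursat_seq n) <= rect_a (goursat_seq (n + k)) /\
  rect_b (goursat_seq (n + k)) <= rect_b (goursat_seq n) /\
  rect_c (goursat_seq n) <= rect_c (goursat_seq (n + k)) /\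
  rect_d (goursat_seq (n + k)) <= rect_d (goursat_seq n).
Proof.
  induction k as [| k IHk].
  - rewrite Nat.add_0_r. lra.
  - rewrite Nat.add_succ_r. cbn [goursat_seq].
    destruct (worst_quarter_spec _ (proj1 (goursat_seq_spec (n + k)))) as ((_ & K2 & K3 & K4 & K5 & _) & _).
    lra.
Qed.

Lemma goursat_seq_nested m n :
  rect_a (goursat_seq m) <= rect_b (goursat_seq n) /\ rect_c (goursat_seq m) <= rect_d (goursat_seq n).
Proof.
  destruct (goursat_seq_mono m n) as (A1 & A2 & A3 & A4).
  destruct (goursat_seq_mono n m) as (B1 & B2 & B3 & B4).
  rewrite Nat.add_comm in B1, B2, B3, B4.
  destruct (goursat_seq_spec (m + n)) as ((S1 & S2 & S3 & S4) & _). lra.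
Qed.

Theorem goursat : rect_integral h a0 b0 c0 d0 = 0%C.
Proof.
  destruct (nested_intervals_point (fun n => rect_a (goursat_seq n)) (fun n => rect_b (goursat_seq n)))
    as [x Hx]; [intros; apply goursat_seq_nested |].
  destruct (nested_intervals_point (fun n => rect_c (goursat_seq n)) (fun n => rect_d (goursat_seq n)))
    as [y Hy]; [intros; apply goursat_seq_nested |].
  destruct (Hh (x, y)) as [l Hl]; [exact (conj (Hx O) (Hy O)) |].
  set (W := (b0 - a0) + (d0 - c0)).
  (* [|I| <= 4^n |I_n|], and the affine approximation at [(x, y)] makes [|I_n| <= 2 eta (W / 2^n)^2]. *)
  apply C_eq0_of_le_eps. intros eps Heps.
  set (eta := eps / (2 * (W * W + 1))).
  assert (Heta : 0 < eta) by (apply Rdiv_lt_0_compat; nra).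
  destruct (Hl eta Heta) as [del [Hdel Hk]].
  destruct (half_pow_lt (del / (W + 1))) as [n Hn]; [apply Rdiv_lt_0_compat; unfold W; lra |].
  specialize (Hn n (le_n n)).
  destruct (goursat_seq_spec n) as (Hin & Hw & Hh' & Hb).
  set (r := goursat_seq n) in *. unfold rint in Hb.
  assert (Hpos : 0 < (/ 2) ^ n) by (apply pow_lt; lra).
  assert (HWn : W * (/ 2) ^ n < del).
  { apply Rle_lt_trans with ((W + 1) * (/ 2) ^ n); [unfold W; nra |].
    apply (Rmult_lt_reg_r (/ (W + 1))); [apply Rinv_0_lt_compat; unfold W; lra |].
    replace ((W + 1) * (/ 2) ^ n * / (W + 1)) with ((/ 2) ^ n) by (field; unfold W; lra). exact Hn. }
  eapply Rle_trans; [exact Hb |].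
  apply Rle_trans with (4 ^ n * (2 * eta * (W * (/ 2) ^ n) ^ 2)).
  - apply Rmult_le_compat_l; [apply pow_le; lra |].
    replace (W * (/ 2) ^ n) with ((rect_b r - rect_a r) + (rect_d r - rect_c r))
      by (rewrite Hw, Hh'; unfold W; ring).
    destruct Hin as (I1 & I2 & I3 & I4).
    apply (rect_integral_near_Cderive h (x, y) l eta del (rect_a r) (rect_b r) (rect_c r) (rect_d r));
      [lra | lra | lra | | exact (conj (Hx n) (Hy n)) | rewrite Hw, Hh'; unfold W in HWn; lra | exact Hk].
    apply ex_rect_integral_continuous; [lra | lra |]. intros z [[Z1 Z2] _].
    apply goursat_continuous. split; lra.
  - replace (4 ^ n * (2 * eta * (W * (/ 2) ^ n) ^ 2))
      with (2 * eta * (W * W) * (4 ^ n * ((/ 2) ^ n * (/ 2) ^ n))) by ring.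
    rewrite pow4_half_pow_sq, Rmult_1_r. unfold eta.
    replace (2 * (eps / (2 * (W * W + 1))) * (W * W)) with (eps * (W * W / (W * W + 1))) by (field; nra).
    assert (W * W / (W * W + 1) <= 1)
      by (apply Rmult_le_reg_r with (W * W + 1);
          [nra | unfold Rdiv; rewrite Rmult_assoc, Rinv_l by nra; nra]).
    nra.
Qed.

End Goursat.

Section Excision.

Variable h : C -> C.
Variables a b c d a' b' c' d' : R.
Variable z : C.
Hypothesis Ha : a < a' < fst z.
Hypothesis Hb : fst z < b' < b.
Hypothesis Hc : c < c' < snd z.
Hypothesis Hd : snd z < d' < d.
Hypothesis Hh : forall w, in_rect a b c d w -> w <> z -> exists l, is_Cderive h w l.

Lemma excision_ex_CInt_x (y s t : R) : c <= y <= d -> y < snd z \/ snd z < y ->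
  a <= s <= t -> t <= b -> ex_CInt (fun u => h (u, y)) s t.
Proof.
  intros Hy Hyz Hs Ht. apply ex_CInt_isometric_path; [lra | intros; apply Cmod_sub_pair_l |].
  intros u Hu. destruct (Hh (u, y)) as [l Hl].
  - unfold in_rect; simpl. split; lra.
  - intros E. rewrite <- E in Hyz. simpl in Hyz. lra.
  - exact (is_Cderive_continuous _ _ _ Hl).
Qed.

Lemma excision_ex_CInt_y (x s t : R) : a <= x <= b -> x < fst z \/ fst z < x ->
  c <= s <= t -> t <= d -> ex_CInt (fun u => h (x, u)) s t.
Proof.
  intros Hx Hxz Hs Ht. apply ex_CInt_isometric_path; [lra | intros; apply Cmod_sub_pair_r |].
  intros u Hu. destruct (Hh (x, u)) as [l Hl].
  - unfold in_rect; simpl. split; lra.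
  - intros E. rewrite <- E in Hxz. simpl in Hxz. lra.
  - exact (is_Cderive_continuous _ _ _ Hl).
Qed.

Lemma rect_integral_eq0_avoiding s t u v : a <= s <= t -> t <= b -> c <= u <= v -> v <= d ->
  t < fst z \/ fst z < s \/ v < snd z \/ snd z < u -> rect_integral h s t u v = 0%C.
Proof.
  intros H1 H2 H3 H4 H5. apply goursat; try lra.
  intros w [Hw1 Hw2]. apply Hh; [split; lra |].
  intros E. rewrite E in Hw1, Hw2. lra.
Qed.

Local Ltac side_integrable :=
  lazymatch goal with
  | |- ex_CInt (fun t => h (t, _)) _ _ => apply excision_ex_CInt_x
  | |- ex_CInt (fun t => h (_, t)) _ _ => apply excision_ex_CInt_y
  end; first [ lra | left; lra | right; lra ].

Theorem rect_integral_excise : rect_integral h a b c d = rect_integral h a' b' c' d'.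
Proof.
  rewrite (rect_integral_split_x h a a' b c d), (rect_integral_split_x h a' b' b c d),
    (rect_integral_split_y h a' b' c c' d), (rect_integral_split_y h a' b' c' d' d);
    try side_integrable.
  rewrite (rect_integral_eq0_avoiding a a' c d), (rect_integral_eq0_avoiding b' b c d),
    (rect_integral_eq0_avoiding a' b' c c'), (rect_integral_eq0_avoiding a' b' d' d); try lra.
  ring.
Qed.

End Excision.

Lemma Ccontinuous_inv_sub (z0 w : C) : w <> z0 -> Ccontinuous (fun u => / (u - z0))%C w.
Proof. intros Hw. exact (is_Cderive_continuous _ _ _ (is_Cderive_inv_sub z0 w Hw)). Qed.

(* Its value is [2 pi i]; all that is needed is that it does not vanish. *)
Definition inv_square_integral (e : R) : C := rect_integral (fun w => / w)%C (- e) e (- e) e.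

Lemma ex_rect_integral_inv (e : R) : 0 < e -> ex_rect_integral (fun w => / w)%C (- e) e (- e) e.
Proof.
  intros He. apply (ex_rect_integral_ext (fun w => / (w - 0))%C); try lra.
  - intros w _. f_equal. ring.
  - apply ex_rect_integral_continuous; try lra. intros w [_ Hw]. apply Ccontinuous_inv_sub.
    intros E. rewrite E in Hw. simpl in Hw. lra.
Qed.

Lemma inv_square_integral_Im_pos (e : R) : 0 < e -> 0 < snd (inv_square_integral e).
Proof.
  intros He.
  (* Each of the four sides contributes [RInt P (-e) e] to the imaginary part. *)
  set (P := fun t => e / (t ^ 2 + e ^ 2)).
  assert (HP : forall t, 0 < t ^ 2 + e ^ 2)
    by (intros t; generalize (pow2_ge_0 t) (pow_lt e 2 He); lra).
  assert (Pcont : forall t, continuous P t).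
  { intros t. apply (@ex_derive_continuous R_AbsRing R_NormedModule). unfold P.
    auto_derive. generalize (HP t). lra. }
  assert (Pex : ex_RInt P (- e) e)
    by (apply (@ex_RInt_continuous R_CompleteNormedModule); intros t _; apply Pcont).
  assert (Ppos : 0 < RInt P (- e) e).
  { apply RInt_gt_0; [lra | | intros t _; apply Pcont].
    intros t _. apply Rdiv_lt_0_compat; [lra | apply HP]. }
  destruct (ex_rect_integral_inv e He) as (A1 & A2 & A3 & A4).
  unfold inv_square_integral, rect_integral.
  assert (Hsnd : forall A B C' D : C, snd (A + Ci * B - C' - Ci * D)%C = snd A + fst B - snd C' - fst D)
    by (intros [] [] [] []; unfold Ci, Cminus, Cplus, Copp, Cmult; simpl; ring).
  rewrite Hsnd.
  rewrite (CInt_snd _ _ _ A1), (CInt_fst _ _ _ A4), (CInt_snd _ _ _ A2), (CInt_fst _ _ _ A3).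
  rewrite (RInt_ext (fun t => snd (/ (t, (- e)%R))%C) P), (RInt_ext (fun t => fst (/ (e, t))%C) P),
    (RInt_ext (fun t => snd (/ (t, e))%C) (fun t => - P t)),
    (RInt_ext (fun t => fst (/ ((- e)%R, t))%C) (fun t => - P t)).
  - assert (Hopp : RInt (fun t => - P t) (- e) e = - RInt P (- e) e) by exact (RInt_opp P _ _ Pex).
    rewrite Hopp. lra.
  all: intros t _; unfold Cinv, P; simpl; field; generalize (HP t); nra.
Qed.

Lemma inv_square_integral_neq0 (e : R) : 0 < e -> inv_square_integral e <> 0%C.
Proof. intros He E. generalize (inv_square_integral_Im_pos e He). rewrite E. simpl. lra. Qed.

Definition in_square (z0 : C) (r : R) (z : C) : Prop :=
  in_rect (fst z0 - r) (fst z0 + r) (snd z0 - r) (snd z0 + r) z.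

Definition on_square (z0 : C) (r : R) (z : C) : Prop :=
  on_rect_boundary (fst z0 - r) (fst z0 + r) (snd z0 - r) (snd z0 + r) z.

Definition square_integral (h : C -> C) (z0 : C) (r : R) : C :=
  rect_integral h (fst z0 - r) (fst z0 + r) (snd z0 - r) (snd z0 + r).

Lemma in_square_Rabs (z0 z : C) (r : R) :
  in_square z0 r z <-> Rabs (fst z - fst z0) <= r /\ Rabs (snd z - snd z0) <= r.
Proof.
  unfold in_square, in_rect. rewrite !Rabs_le_between. split; intros [H1 H2]; split; lra.
Qed.

Lemma in_square_center z e : 0 <= e -> in_square z e z.
Proof. intros He. apply in_square_Rabs. rewrite !Rminus_eq_0, Rabs_R0. lra. Qed.

Lemma in_square_of_Cmod (z0 z : C) (r : R) : Cmod (z - z0)%C <= r -> in_square z0 r z.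
Proof.
  intros H. apply in_square_Rabs. rewrite <- fst_Cminus, <- snd_Cminus.
  generalize (Rabs_fst_le_Cmod (z - z0)%C) (Rabs_snd_le_Cmod (z - z0)%C). lra.
Qed.

Lemma on_square_dist (z0 w : C) (r : R) : 0 < r -> on_square z0 r w ->
  r <= Cmod (w - z0)%C /\ Cmod (w - z0)%C <= 2 * r.
Proof.
  intros Hr [Hw Hside]. apply in_square_Rabs in Hw. destruct Hw as [H1 H2]. split.
  - generalize (Rabs_fst_le_Cmod (w - z0)%C) (Rabs_snd_le_Cmod (w - z0)%C).
    rewrite fst_Cminus, snd_Cminus.
    destruct Hside as [E | [E | [E | E]]]; rewrite E; intros A B;
      [ replace (fst z0 - r - fst z0) with (- r) in A by ring; rewrite Rabs_Ropp in A
      | replace (fst z0 + r - fst z0) with r in A by ring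
      | replace (snd z0 - r - snd z0) with (- r) in B by ring; rewrite Rabs_Ropp in B
      | replace (snd z0 + r - snd z0) with r in B by ring ];
      rewrite Rabs_right in * by lra; lra.
  - eapply Rle_trans; [apply Cmod_sub_le_Rabs_sum | lra].
Qed.

Lemma square_integral_shift (h : C -> C) (z0 : C) (r : R) :
  ex_rect_integral h (fst z0 - r) (fst z0 + r) (snd z0 - r) (snd z0 + r) ->
  square_integral h z0 r = rect_integral (fun w => h (w + z0))%C (- r) r (- r) r.
Proof.
  intros H. unfold square_integral.
  replace (fst z0 - r) with (- r + fst z0) in * by ring.
  replace (fst z0 + r) with (r + fst z0) in * by ring.
  replace (snd z0 - r) with (- r + snd z0) in * by ring.
  replace (snd z0 + r) with (r + snd z0) in * by ring.
  apply rect_integral_shift; [exact H | reflexivity].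
Qed.

Lemma square_integral_norm_le (h : C -> C) (z0 : C) (r M : R) : 0 <= r ->
  ex_rect_integral h (fst z0 - r) (fst z0 + r) (snd z0 - r) (snd z0 + r) ->
  (forall w, on_square z0 r w -> Cmod (h w) <= M) -> Cmod (square_integral h z0 r) <= 8 * r * M.
Proof.
  intros Hr H HM. unfold square_integral.
  replace (8 * r) with (2 * ((fst z0 + r - (fst z0 - r)) + (snd z0 + r - (snd z0 - r)))) by ring.
  apply rect_integral_norm_le; [lra | lra | exact H | exact HM].
Qed.

Section Cauchy.

Variable f : C -> C.
Variable z0 : C.
Variable s : R.
Hypothesis Hs : 0 < s.
Hypothesis Hf : forall w, in_square z0 s w -> exists l, is_Cderive f w l.

Lemma in_square_shrink z e w : in_square z0 (s / 4) z -> 0 < e <= s / 4 ->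
  in_square z e w -> in_square z0 s w.
Proof.
  rewrite !in_square_Rabs. intros [H1 H2] He [H3 H4]. split.
  - replace (fst w - fst z0) with ((fst w - fst z) + (fst z - fst z0)) by ring.
    eapply Rle_trans; [apply Rabs_triang | lra].
  - replace (snd w - snd z0) with ((snd w - snd z) + (snd z - snd z0)) by ring.
    eapply Rle_trans; [apply Rabs_triang | lra].
Qed.

Lemma ex_square_integral_punctured (g : C -> C) z e : in_square z0 (s / 4) z -> 0 < e <= s / 4 ->
  (forall w, in_square z0 s w -> w <> z -> exists l, is_Cderive g w l) ->
  ex_rect_integral g (fst z - e) (fst z + e) (snd z - e) (snd z + e).
Proof.
  intros Hz He Hg. apply ex_rect_integral_continuous; try lra. intros w Hw.
  destruct (on_square_dist z w e ltac:(lra) Hw) as [Hd _].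
  destruct (Hg w) as [l Hl].
  - apply (in_square_shrink z e); [exact Hz | exact He | apply Hw].
  - apply Cmod_sub_pos_iff. lra.
  - exact (is_Cderive_continuous _ _ _ Hl).
Qed.

Lemma square_integral_excise (g : C -> C) z e : in_square z0 (s / 4) z -> 0 < e <= s / 4 ->
  (forall w, in_square z0 s w -> w <> z -> exists l, is_Cderive g w l) ->
  square_integral g z0 s = square_integral g z e.
Proof.
  intros Hz He Hg. apply in_square_Rabs in Hz. destruct Hz as [H1 H2].
  apply Rabs_le_between in H1. apply Rabs_le_between in H2.
  unfold square_integral. apply (rect_integral_excise g) with (z := z); try lra. exact Hg.
Qed.

Lemma square_integral_inv_sub z : in_square z0 (s / 4) z ->
  square_integral (fun w => / (w - z))%C z0 s = inv_square_integral (s / 4).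
Proof.
  intros Hz.
  assert (Hinv : forall w, in_square z0 s w -> w <> z -> exists l, is_Cderive (fun u => / (u - z))%C w l)
    by (intros w _ Hw; eexists; apply is_Cderive_inv_sub, Hw).
  rewrite (square_integral_excise _ z (s / 4) Hz ltac:(lra) Hinv).
  rewrite square_integral_shift by (apply ex_square_integral_punctured; [exact Hz | lra | exact Hinv]).
  unfold inv_square_integral. apply rect_integral_ext; try lra.
  intros w _. f_equal. ring.
Qed.

Lemma cauchy_defect_small z e : in_square z0 (s / 4) z -> 0 < e <= s / 4 ->
  (square_integral (fun w => f w * / (w - z)) z0 s - f z * square_integral (fun w => / (w - z)) z0 s)%C
  = square_integral (fun w => (f w - f z) * / (w - z))%C z e.
Proof.
  intros Hz He.
  assert (HI : forall w, in_square z0 s w -> w <> z ->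
                 exists l, is_Cderive (fun u => / (u - z))%C w l)
    by (intros w _ Hw; eexists; apply is_Cderive_inv_sub, Hw).
  assert (HF : forall w, in_square z0 s w -> w <> z ->
                 exists l, is_Cderive (fun u => f u * / (u - z))%C w l).
  { intros w Hw Hwz. destruct (Hf w Hw) as [l Hl].
    eexists. apply is_Cderive_mult; [exact Hl | apply is_Cderive_inv_sub, Hwz]. }
  rewrite (square_integral_excise _ z e Hz He HF), (square_integral_excise _ z e Hz He HI).
  assert (AI := ex_square_integral_punctured _ z e Hz He HI).
  assert (AF := ex_square_integral_punctured _ z e Hz He HF).
  unfold square_integral.
  rewrite <- (rect_integral_Cmult_l (fun u => / (u - z))%C (f z)) by exact AI.
  rewrite <- rect_integral_minus; [| exact AF | apply ex_rect_integral_Cmult_l, AI].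
  apply rect_integral_ext; try lra. intros w _. ring.
Qed.

Theorem cauchy_formula z : in_square z0 (s / 4) z ->
  (f z * inv_square_integral (s / 4))%C = square_integral (fun w => f w * / (w - z))%C z0 s.
Proof.
  intros Hz. rewrite <- (square_integral_inv_sub z Hz).
  symmetry. apply Ceq_minus, C_eq0_of_le_eps. intros eps Heps.
  destruct (Hf z) as [l Hl];
    [apply (in_square_shrink z (s / 4)); [exact Hz | lra | apply in_square_center; lra] |].
  destruct (Hl 1 Rlt_0_1) as [del [Hdel Hk]].
  set (B := Cmod l + 1). assert (HB : 1 <= B) by (unfold B; generalize (Cmod_ge_0 l); lra).
  set (e := Rmin (Rmin (s / 4) (del / 4)) (eps / (8 * B))).
  assert (He : 0 < e) by (repeat apply Rmin_pos; try apply Rdiv_lt_0_compat; lra).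
  assert (He1 : e <= s / 4) by (unfold e; eapply Rle_trans; apply Rmin_l).
  assert (He2 : e <= del / 4) by (unfold e; eapply Rle_trans; [apply Rmin_l | apply Rmin_r]).
  assert (He3 : 8 * e * B <= eps).
  { apply Rle_trans with (8 * (eps / (8 * B)) * B).
    - apply Rmult_le_compat_r; [lra |]. apply Rmult_le_compat_l; [lra | apply Rmin_r].
    - right. field. lra. }
  rewrite (cauchy_defect_small z e Hz ltac:(lra)).
  eapply Rle_trans; [| exact He3].
  apply square_integral_norm_le; [lra | |].
  - apply ex_square_integral_punctured; [exact Hz | lra |].
    intros w Hw Hwz. destruct (Hf w Hw) as [lw Hlw]. eexists.
    apply is_Cderive_mult; [apply (is_Cderive_plus f (fun _ => - f z)%C), is_Cderive_const; exact Hlw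
                           | apply is_Cderive_inv_sub, Hwz].
  - intros w Hw. destruct (on_square_dist z w e He Hw) as [D1 D2].
    assert (Pw : 0 < Cmod (w - z)%C) by lra.
    specialize (Hk w ltac:(lra)).
    rewrite Cmod_mult, Cmod_inv by (apply Cmod_gt_0, Pw).
    assert (Cmod (f w - f z)%C <= B * Cmod (w - z)%C).
    { replace (f w - f z)%C with ((f w - f z - l * (w - z)) + l * (w - z))%C by ring.
      eapply Rle_trans; [apply Cmod_triangle |]. rewrite Cmod_mult. unfold B. lra. }
    apply (Rmult_le_reg_r (Cmod (w - z)%C)); [exact Pw |].
    rewrite Rmult_assoc, Rinv_l by lra. lra.
Qed.

End Cauchy.

(** * Holomorphic functions are locally C^{1,1} *)

Definition C11_estimates (f G : C -> C) (P : C -> Prop) (L : R) : Prop :=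
  forall z z', P z -> P z' ->
    Cmod (f z' - f z)%C <= L * Cmod (z' - z)%C /\
    Cmod (f z' - f z - G z * (z' - z))%C <= L * (Cmod (z' - z)%C * Cmod (z' - z)%C) /\
    Cmod (G z) <= L /\ Cmod (G z' - G z)%C <= L * Cmod (z' - z)%C.

Section CauchyEstimates.

Variable f : C -> C.
Variable z0 : C.
Variable s : R.
Hypothesis Hs : 0 < s.
Hypothesis Hf : forall w, in_square z0 s w -> exists l, is_Cderive f w l.
Variable M : R.
Hypothesis HM : forall w, in_square z0 s w -> Cmod (f w) <= M.

Definition cauchy_deriv (z : C) : C :=
  (square_integral (fun w => f w * / (w - z) * / (w - z))%C z0 s * / inv_square_integral (s / 4))%C.

Lemma inv_square_integral_pos : 0 < Cmod (inv_square_integral (s / 4)).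
Proof. apply Cmod_gt_0, inv_square_integral_neq0. lra. Qed.

Lemma M_nonneg : 0 <= M.
Proof. eapply Rle_trans; [apply Cmod_ge_0 | apply (HM z0), in_square_center; lra]. Qed.

Lemma square_boundary_far z w : in_square z0 (s / 4) z -> on_square z0 s w ->
  s / 2 <= Cmod (w - z)%C <= 3 * s.
Proof.
  intros Hz Hw. destruct (on_square_dist z0 w s Hs Hw) as [D1 D2].
  apply in_square_Rabs in Hz. destruct Hz as [Z1 Z2].
  assert (Hzz : Cmod (z - z0)%C <= s / 2) by (eapply Rle_trans; [apply Cmod_sub_le_Rabs_sum | lra]).
  replace (w - z)%C with ((w - z0) - (z - z0))%C by ring. split.
  - generalize (Cmod_sub_ge (w - z0)%C (z - z0)%C). lra.
  - generalize (Cmod_sub_le (w - z0)%C (z - z0)%C). lra.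
Qed.

Lemma square_boundary_neq z w : in_square z0 (s / 4) z -> on_square z0 s w -> w <> z.
Proof. intros Hz Hw. apply Cmod_sub_pos_iff. generalize (square_boundary_far z w Hz Hw). lra. Qed.

Lemma square_boundary_inv_bound z w : in_square z0 (s / 4) z -> on_square z0 s w ->
  Cmod (/ (w - z))%C <= 2 / s.
Proof.
  intros Hz Hw. destruct (square_boundary_far z w Hz Hw) as [D _].
  rewrite Cmod_inv by (apply Cmod_gt_0; lra).
  replace (2 / s) with (/ (s / 2)) by (field; lra).
  apply Rinv_le_contravar; lra.
Qed.

Lemma ex_square_integral_continuous (h : C -> C) :
  (forall w, on_square z0 s w -> Ccontinuous h w) ->
  ex_rect_integral h (fst z0 - s) (fst z0 + s) (snd z0 - s) (snd z0 + s).
Proof. intros H. apply ex_rect_integral_continuous; [lra | lra | exact H]. Qed.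

Lemma cauchy_kernel_continuous z w : in_square z0 (s / 4) z -> on_square z0 s w ->
  Ccontinuous (fun u => f u * / (u - z))%C w /\ Ccontinuous (fun u => f u * / (u - z) * / (u - z))%C w.
Proof.
  intros Hz Hw. destruct (Hf w (proj1 Hw)) as [l Hl].
  assert (Hinv := is_Cderive_inv_sub z w (square_boundary_neq z w Hz Hw)).
  split; eapply is_Cderive_continuous; repeat apply is_Cderive_mult; eassumption.
Qed.

Lemma cauchy_repr z : in_square z0 (s / 4) z ->
  f z = (square_integral (fun w => f w * / (w - z))%C z0 s * / inv_square_integral (s / 4))%C.
Proof.
  intros Hz. rewrite <- (cauchy_formula f z0 s Hs Hf z Hz). field. apply inv_square_integral_neq0. lra.
Qed.

Lemma ex_cauchy_kernels z : in_square z0 (s / 4) z ->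
  ex_rect_integral (fun u => f u * / (u - z))%C (fst z0 - s) (fst z0 + s) (snd z0 - s) (snd z0 + s) /\
  ex_rect_integral (fun u => f u * / (u - z) * / (u - z))%C
    (fst z0 - s) (fst z0 + s) (snd z0 - s) (snd z0 + s).
Proof.
  intros Hz. split; apply ex_square_integral_continuous; intros w Hw;
    apply (cauchy_kernel_continuous z w Hz Hw).
Qed.

Lemma square_integral_minus_div (h1 h2 : C -> C) (k : C) :
  ex_rect_integral h1 (fst z0 - s) (fst z0 + s) (snd z0 - s) (snd z0 + s) ->
  ex_rect_integral h2 (fst z0 - s) (fst z0 + s) (snd z0 - s) (snd z0 + s) ->
  (square_integral h1 z0 s * / k - square_integral h2 z0 s * / k)%C
  = (square_integral (fun w => h1 w - h2 w)%C z0 s * / k)%C.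
Proof. intros H1 H2. unfold square_integral. rewrite rect_integral_minus by assumption. ring. Qed.

Lemma cauchy_quotient_bound (h : C -> C) (B : R) :
  ex_rect_integral h (fst z0 - s) (fst z0 + s) (snd z0 - s) (snd z0 + s) ->
  (forall w, on_square z0 s w -> Cmod (h w) <= B) ->
  Cmod (square_integral h z0 s * / inv_square_integral (s / 4))%C
    <= 8 * s * B / Cmod (inv_square_integral (s / 4)).
Proof.
  intros Hc HB. assert (PK := inv_square_integral_pos).
  rewrite Cmod_mult, Cmod_inv by (apply Cmod_gt_0, PK).
  apply Rmult_le_compat_r; [apply Rlt_le, Rinv_0_lt_compat, PK |].
  apply square_integral_norm_le; [lra | exact Hc | exact HB].
Qed.

Local Lemma Rmult_le_compat_nonneg (a b A B : R) :
  0 <= a <= A -> 0 <= b <= B -> 0 <= a * b <= A * B.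
Proof. intros [H1 H2] [H3 H4]. split; [apply Rmult_le_pos | apply Rmult_le_compat]; assumption. Qed.

Local Ltac bound_factors :=
  lazymatch goal with
  | |- 0 <= _ * _ <= _ * _ => apply Rmult_le_compat_nonneg; bound_factors
  | |- _ => split; [apply Cmod_ge_0 | first [assumption | lra]]
  end.

Local Ltac bound_product := match goal with |- ?x <= ?y => cut (0 <= x <= y); [tauto | bound_factors] end.

Lemma cauchy_lipschitz z z' : in_square z0 (s / 4) z -> in_square z0 (s / 4) z' ->
  Cmod (f z' - f z)%C <= 32 * M / (s * Cmod (inv_square_integral (s / 4))) * Cmod (z' - z)%C.
Proof.
  intros Hz Hz'. destruct (ex_cauchy_kernels z Hz) as [E1 _]. destruct (ex_cauchy_kernels z' Hz') as [E1' _].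
  rewrite (cauchy_repr z Hz), (cauchy_repr z' Hz'), square_integral_minus_div by assumption.
  eapply Rle_trans;
    [apply cauchy_quotient_bound with (B := M * Cmod (z' - z)%C * (2 / s) * (2 / s));
      [apply ex_rect_integral_minus; assumption |] |].
  - intros w Hw.
    replace (f w * / (w - z') - f w * / (w - z))%C with (f w * (z' - z) * / (w - z) * / (w - z'))%C
      by (field; split; apply Cminus_neq0, square_boundary_neq; assumption).
    assert (A1 := square_boundary_inv_bound z w Hz Hw). assert (A2 := square_boundary_inv_bound z' w Hz' Hw).
    assert (A3 := HM w (proj1 Hw)). rewrite !Cmod_mult. bound_product.
  - right. generalize inv_square_integral_pos. intros. field. lra.
Qed.

Lemma cauchy_taylor z z' : in_square z0 (s / 4) z -> in_square z0 (s / 4) z' ->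
  Cmod (f z' - f z - cauchy_deriv z * (z' - z))%C
    <= 64 * M / (s * s * Cmod (inv_square_integral (s / 4))) * (Cmod (z' - z)%C * Cmod (z' - z)%C).
Proof.
  intros Hz Hz'. destruct (ex_cauchy_kernels z Hz) as [E1 E2]. destruct (ex_cauchy_kernels z' Hz') as [E1' _].
  unfold cauchy_deriv.
  rewrite (cauchy_repr z Hz), (cauchy_repr z' Hz'), square_integral_minus_div by assumption.
  replace (square_integral (fun w => f w * / (w - z) * / (w - z))%C z0 s * / inv_square_integral (s / 4)
             * (z' - z))%C
    with (square_integral (fun w => (z' - z) * (f w * / (w - z) * / (w - z)))%C z0 s
             * / inv_square_integral (s / 4))%C
    by (unfold square_integral; rewrite rect_integral_Cmult_l by exact E2; ring).
  rewrite square_integral_minus_div;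
    [| apply ex_rect_integral_minus; assumption | apply ex_rect_integral_Cmult_l; assumption].
  eapply Rle_trans;
    [apply cauchy_quotient_bound with
       (B := M * Cmod (z' - z)%C * Cmod (z' - z)%C * (2 / s) * (2 / s) * (2 / s));
      [apply ex_rect_integral_minus; [apply ex_rect_integral_minus | apply ex_rect_integral_Cmult_l];
       assumption |] |].
  - intros w Hw.
    replace (f w * / (w - z') - f w * / (w - z) - (z' - z) * (f w * / (w - z) * / (w - z)))%C
      with (f w * (z' - z) * (z' - z) * / (w - z) * / (w - z) * / (w - z'))%C
      by (field; split; apply Cminus_neq0, square_boundary_neq; assumption).
    assert (A1 := square_boundary_inv_bound z w Hz Hw). assert (A2 := square_boundary_inv_bound z' w Hz' Hw).
    assert (A3 := HM w (proj1 Hw)). rewrite !Cmod_mult. bound_product.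
  - right. generalize inv_square_integral_pos. intros. field. lra.
Qed.

Lemma cauchy_deriv_bound z : in_square z0 (s / 4) z ->
  Cmod (cauchy_deriv z) <= 32 * M / (s * Cmod (inv_square_integral (s / 4))).
Proof.
  intros Hz. destruct (ex_cauchy_kernels z Hz) as [_ E2]. unfold cauchy_deriv.
  eapply Rle_trans; [apply cauchy_quotient_bound with (B := M * (2 / s) * (2 / s)); [exact E2 |] |].
  - intros w Hw. assert (A1 := square_boundary_inv_bound z w Hz Hw). assert (A3 := HM w (proj1 Hw)).
    rewrite !Cmod_mult. bound_product.
  - right. generalize inv_square_integral_pos. intros. field. lra.
Qed.

Lemma cauchy_deriv_lipschitz z z' : in_square z0 (s / 4) z -> in_square z0 (s / 4) z' ->
  Cmod (cauchy_deriv z' - cauchy_deriv z)%C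
    <= 768 * M / (s * s * Cmod (inv_square_integral (s / 4))) * Cmod (z' - z)%C.
Proof.
  intros Hz Hz'. destruct (ex_cauchy_kernels z Hz) as [_ E2]. destruct (ex_cauchy_kernels z' Hz') as [_ E2'].
  unfold cauchy_deriv. rewrite square_integral_minus_div by assumption.
  eapply Rle_trans;
    [apply cauchy_quotient_bound with
       (B := M * Cmod (z' - z)%C * (6 * s) * (2 / s) * (2 / s) * (2 / s) * (2 / s));
      [apply ex_rect_integral_minus; assumption |] |].
  - intros w Hw.
    replace (f w * / (w - z') * / (w - z') - f w * / (w - z) * / (w - z))%C
      with (f w * (z' - z) * ((w - z) + (w - z')) * / (w - z) * / (w - z) * / (w - z') * / (w - z'))%C
      by (field; split; apply Cminus_neq0, square_boundary_neq; assumption).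
    assert (A1 := square_boundary_inv_bound z w Hz Hw). assert (A2 := square_boundary_inv_bound z' w Hz' Hw).
    assert (A3 := HM w (proj1 Hw)).
    assert (A4 : Cmod ((w - z) + (w - z'))%C <= 6 * s).
    { eapply Rle_trans; [apply Cmod_triangle |].
      generalize (square_boundary_far z w Hz Hw) (square_boundary_far z' w Hz' Hw). lra. }
    rewrite !Cmod_mult. bound_product.
  - right. generalize inv_square_integral_pos. intros. field. lra.
Qed.

Theorem cauchy_C11 : exists L, 0 < L /\ C11_estimates f cauchy_deriv (in_square z0 (s / 4)) L.
Proof.
  assert (PK := inv_square_integral_pos). assert (PM := M_nonneg).
  set (K := Cmod (inv_square_integral (s / 4))) in *.
  assert (A : 0 <= M / (s * K)) by (apply Rdiv_le_0_compat; nra).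
  assert (B : 0 <= M / (s * s * K)) by (apply Rdiv_le_0_compat; [lra | apply Rmult_lt_0_compat; nra]).
  exists (32 * (M / (s * K)) + 768 * (M / (s * s * K)) + 1). split; [lra |].
  intros z z' Hz Hz'. generalize (Cmod_ge_0 (z' - z)%C). intros Pz.
  repeat split.
  - eapply Rle_trans; [apply cauchy_lipschitz; assumption |]. fold K.
    replace (32 * M / (s * K)) with (32 * (M / (s * K))) by (unfold Rdiv; ring).
    apply Rmult_le_compat_r; lra.
  - eapply Rle_trans; [apply cauchy_taylor; assumption |]. fold K.
    replace (64 * M / (s * s * K)) with (64 * (M / (s * s * K))) by (unfold Rdiv; ring).
    apply Rmult_le_compat_r; nra.
  - eapply Rle_trans; [apply cauchy_deriv_bound; assumption |]. fold K.
    replace (32 * M / (s * K)) with (32 * (M / (s * K))) by (unfold Rdiv; ring). lra.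
  - eapply Rle_trans; [apply cauchy_deriv_lipschitz; assumption |]. fold K.
    replace (768 * M / (s * s * K)) with (768 * (M / (s * s * K))) by (unfold Rdiv; ring).
    apply Rmult_le_compat_r; lra.
Qed.

End CauchyEstimates.

Lemma ball_C_Rabs (z w : C) (eps : R) :
  Rabs (fst w - fst z) < eps -> Rabs (snd w - snd z) < eps -> @ball C_UniformSpace z eps w.
Proof. intros H1 H2. split; assumption. Qed.

Lemma holomorphic_C11_near (U : C -> Prop) (f : C -> C) (z0 : C) :
  open U -> holomorphic_on U f -> U z0 ->
  exists rho G L, 0 < rho /\ 0 < L /\ (forall z, Cmod (z - z0)%C < rho -> U z) /\
    C11_estimates f G (fun z => Cmod (z - z0)%C < rho) L.
Proof.
  intros HUo Hhol Hz0.
  destruct (HUo z0 Hz0) as [eps Heps].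
  destruct (is_Cderive_of_ex_derive f z0 (Hhol z0 Hz0)) as [l0 Hl0].
  destruct (is_Cderive_continuous _ _ _ Hl0 1 Rlt_0_1) as [d1 [Hd1 Hcont]].
  set (s := Rmin eps d1 / 4).
  assert (Hs : 0 < s)
    by (unfold s; generalize (cond_pos eps); intros; apply Rdiv_lt_0_compat; [apply Rmin_pos |]; lra).
  assert (Hs1 : 4 * s <= eps) by (unfold s; generalize (Rmin_l eps d1); lra).
  assert (Hs2 : 4 * s <= d1) by (unfold s; generalize (Rmin_r eps d1); lra).
  assert (HQU : forall w, in_square z0 s w -> U w).
  { intros w Hw. apply in_square_Rabs in Hw. apply Heps, ball_C_Rabs; lra. }
  assert (Hf : forall w, in_square z0 s w -> exists l, is_Cderive f w l)
    by (intros w Hw; apply is_Cderive_of_ex_derive, Hhol, HQU, Hw).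
  assert (HM : forall w, in_square z0 s w -> Cmod (f w) <= Cmod (f z0) + 1).
  { intros w Hw. apply in_square_Rabs in Hw.
    assert (Cmod (w - z0)%C < d1) by (eapply Rle_lt_trans; [apply Cmod_sub_le_Rabs_sum | lra]).
    specialize (Hcont w H). generalize (Cmod_sub_ge (f w) (f z0)). lra. }
  destruct (cauchy_C11 f z0 s Hs Hf _ HM) as [L [HL HC]].
  exists (s / 4), (cauchy_deriv f z0 s), L. split; [lra | split; [exact HL | split]].
  - intros z Hz. apply HQU, in_square_of_Cmod. lra.
  - intros z z' Hz Hz'. apply HC; apply in_square_of_Cmod; lra.
Qed.

(** * Solving the implicit equation *)

Lemma scal_R_C (r : R) (d : C) : @scal R_AbsRing C_R_NormedModule r d = (RtoC r * d)%C.
Proof.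
  destruct d as [d1 d2]. unfold scal; simpl. unfold prod_scal; simpl. unfold scal; simpl.
  unfold mult; simpl. unfold Cmult, RtoC; simpl. f_equal; ring.
Qed.

Lemma is_derive_of_quadratic_remainder (F : R -> C) (t0 : R) (d : C) (r K : R) :
  0 < r -> 0 <= K ->
  (forall t, Rabs (t - t0) < r ->
     Cmod (F t - F t0 - RtoC (t - t0) * d)%C <= K * (Rabs (t - t0) * Rabs (t - t0))) ->
  @is_derive R_AbsRing C_R_NormedModule F t0 d.
Proof.
  intros Hr HK H. split; [apply is_linear_scal_l |].
  intros x Hx. apply (@is_filter_lim_locally_unique R_AbsRing R_NormedModule) in Hx. subst x.
  intros eps.
  assert (Hpos : 0 < Rmin r (eps / (K + 1)))
    by (apply Rmin_pos; [lra | apply Rdiv_lt_0_compat; [apply cond_pos | lra]]).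
  exists (mkposreal _ Hpos). intros t Ht.
  change (Rabs (t + - t0) < Rmin r (eps / (K + 1))) in Ht. fold (t - t0) in Ht.
  assert (H1 : Rabs (t - t0) < r) by exact (Rlt_le_trans _ _ _ Ht (Rmin_l _ _)).
  assert (H2 : Rabs (t - t0) * (K + 1) < eps).
  { apply (Rmult_lt_reg_r (/ (K + 1))); [apply Rinv_0_lt_compat; lra |].
    rewrite Rmult_assoc, Rinv_r, Rmult_1_r by lra. exact (Rlt_le_trans _ _ _ Ht (Rmin_r _ _)). }
  change (@norm R_AbsRing C_R_NormedModule (minus (minus (F t) (F t0)) (scal (t - t0) d))
          <= eps * Rabs (t - t0)).
  rewrite Cmod_norm_R, scal_R_C.
  unfold minus, plus, opp; simpl.
  replace (F t + - F t0 + - (RtoC (t - t0) * d))%C with (F t - F t0 - RtoC (t - t0) * d)%C by ring.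
  eapply Rle_trans; [apply (H t H1) |].
  generalize (Rabs_pos (t - t0)). nra.
Qed.

Lemma continuous_of_local_lipschitz (F : R * R -> C) (p : R * R) (r B : R) : 0 < r -> 0 <= B ->
  (forall q, Rabs (fst q - fst p) < r -> Rabs (snd q - snd p) < r ->
     Cmod (F q - F p)%C <= B * (Rabs (fst q - fst p) + Rabs (snd q - snd p))) ->
  @continuous (prod_UniformSpace R_UniformSpace R_UniformSpace) C_UniformSpace F p.
Proof.
  intros Hr HB H. apply continuous_C_iff. intros eps He. apply locally_R2_iff.
  exists (Rmin r (eps / (2 * (B + 1)))). split; [apply Rmin_pos; [lra | apply Rdiv_lt_0_compat; lra] |].
  intros q K1 K2.
  assert (A1 := Rlt_le_trans _ _ _ K1 (Rmin_r _ _)). assert (A2 := Rlt_le_trans _ _ _ K2 (Rmin_r _ _)).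
  eapply Rle_lt_trans;
    [apply H; [exact (Rlt_le_trans _ _ _ K1 (Rmin_l _ _)) | exact (Rlt_le_trans _ _ _ K2 (Rmin_l _ _))] |].
  apply Rle_lt_trans with (B * (2 * (eps / (2 * (B + 1))))).
  - apply Rmult_le_compat_l; lra.
  - replace (B * (2 * (eps / (2 * (B + 1))))) with (eps * (B / (B + 1))) by (field; lra).
    assert (B / (B + 1) < 1)
      by (apply (Rmult_lt_reg_r (B + 1)); [lra | unfold Rdiv; rewrite Rmult_assoc, Rinv_l by lra; lra]).
    nra.
Qed.

Lemma C_cauchy_cv (u : nat -> C) :
  (forall eps, 0 < eps -> exists N, forall n m, (N <= n)%nat -> (N <= m)%nat -> Cmod (u m - u n)%C < eps) ->
  exists l, forall eps, 0 < eps -> exists N, forall n, (N <= n)%nat -> Cmod (u n - l)%C < eps.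
Proof.
  intros Hu.
  assert (Hcrit : forall pr : C -> R, (forall z, Rabs (pr z) <= Cmod z) ->
            (forall a b, pr (a - b)%C = pr a - pr b) -> Cauchy_crit (fun n => pr (u n))).
  { intros pr Hpr Hlin eps He. destruct (Hu eps He) as [N HN]. exists N. intros n m Hn Hm.
    unfold R_dist. rewrite <- Hlin. eapply Rle_lt_trans; [apply Hpr | apply HN; lia]. }
  destruct (Rcomplete.R_complete _ (Hcrit fst Rabs_fst_le_Cmod fst_Cminus)) as [l1 Hl1].
  destruct (Rcomplete.R_complete _ (Hcrit snd Rabs_snd_le_Cmod snd_Cminus)) as [l2 Hl2].
  exists (l1, l2). intros eps He.
  destruct (Hl1 (eps / 2) ltac:(lra)) as [N1 K1]. destruct (Hl2 (eps / 2) ltac:(lra)) as [N2 K2].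
  exists (max N1 N2). intros n Hn. eapply Rle_lt_trans; [apply Cmod_sub_le_Rabs_sum |].
  specialize (K1 n ltac:(lia)). specialize (K2 n ltac:(lia)). unfold R_dist in K1, K2. simpl. lra.
Qed.

Section Contraction.

Variables (T : C -> C) (c : C).
Hypothesis Hball : forall la, Cmod (la - c)%C <= 1 -> Cmod (T la - c)%C <= 1 / 2.
Hypothesis Hcontr : forall l1 l2, Cmod (l1 - c)%C <= 1 -> Cmod (l2 - c)%C <= 1 ->
  Cmod (T l1 - T l2)%C <= 1 / 2 * Cmod (l1 - l2)%C.

Lemma contraction_fixed_point_unique l1 l2 : Cmod (l1 - c)%C <= 1 -> Cmod (l2 - c)%C <= 1 ->
  l1 = T l1 -> l2 = T l2 -> l1 = l2.
Proof.
  intros H1 H2 E1 E2. assert (K := Hcontr l1 l2 H1 H2). rewrite <- E1, <- E2 in K.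
  apply Ceq_minus, Cmod_eq_0. generalize (Cmod_ge_0 (l1 - l2)%C). lra.
Qed.

Lemma picard_iter_ball n : Cmod (Nat.iter n T c - c)%C <= 1 / 2.
Proof.
  induction n as [| n IHn]; simpl.
  - replace (c - c)%C with (RtoC 0) by ring. rewrite Cmod_0. lra.
  - apply Hball. lra.
Qed.

Lemma picard_iter_step n : Cmod (Nat.iter (S n) T c - Nat.iter n T c)%C <= (/ 2) ^ n.
Proof.
  induction n as [| n IHn].
  - generalize (picard_iter_ball 1). simpl. lra.
  - change (Nat.iter (S (S n)) T c) with (T (Nat.iter (S n) T c)).
    change (Nat.iter (S n) T c) with (T (Nat.iter n T c)) at 2.
    eapply Rle_trans; [apply Hcontr; generalize (picard_iter_ball (S n)) (picard_iter_ball n); simpl; lra |].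
    change ((/ 2) ^ S n) with (/ 2 * (/ 2) ^ n). lra.
Qed.

Lemma picard_iter_cauchy n k : Cmod (Nat.iter (n + k) T c - Nat.iter n T c)%C <= 2 * (/ 2) ^ n.
Proof.
  assert (Hk : Cmod (Nat.iter (n + k) T c - Nat.iter n T c)%C <= 2 * (/ 2) ^ n - 2 * (/ 2) ^ (n + k)).
  { induction k as [| k IHk].
    - rewrite Nat.add_0_r. replace (Nat.iter n T c - Nat.iter n T c)%C with (RtoC 0) by ring.
      rewrite Cmod_0. lra.
    - rewrite Nat.add_succ_r.
      replace (Nat.iter (S (n + k)) T c - Nat.iter n T c)%C
        with ((Nat.iter (S (n + k)) T c - Nat.iter (n + k) T c) + (Nat.iter (n + k) T c - Nat.iter n T c))%C
        by ring.
      eapply Rle_trans; [apply Cmod_triangle |]. generalize (picard_iter_step (n + k)). simpl. lra. }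
  generalize (pow_lt (/ 2) (n + k) ltac:(lra)). lra.
Qed.

Theorem contraction_fixed_point : exists la, Cmod (la - c)%C <= 1 / 2 /\ la = T la.
Proof.
  destruct (C_cauchy_cv (fun n => Nat.iter n T c)) as [l Hl].
  { intros eps He. destruct (half_pow_lt (eps / 2)) as [N HN]; [lra |].
    exists N. intros n m Hn Hm.
    assert (Hc : forall a b, (N <= a)%nat -> Cmod (Nat.iter (a + b) T c - Nat.iter a T c)%C < eps).
    { intros a b Ha. eapply Rle_lt_trans; [apply picard_iter_cauchy | generalize (HN a Ha); lra]. }
    destruct (Nat.le_ge_cases n m).
    - replace m with (n + (m - n))%nat by lia. apply Hc, Hn.
    - replace n with (m + (n - m))%nat by lia. rewrite Cmod_sub_sym. apply Hc, Hm. }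
  assert (Hlc : Cmod (l - c)%C <= 1 / 2).
  { apply Rle_of_le_eps. intros eps He. destruct (Hl eps He) as [N HN].
    specialize (HN N (le_n N)). generalize (picard_iter_ball N).
    replace (l - c)%C with ((Nat.iter N T c - c) - (Nat.iter N T c - l))%C by ring.
    generalize (Cmod_sub_le (Nat.iter N T c - c)%C (Nat.iter N T c - l)%C). lra. }
  exists l. split; [exact Hlc |].
  apply Ceq_minus, C_eq0_of_le_eps. intros eps He.
  destruct (Hl (eps / 2) ltac:(lra)) as [N HN].
  assert (A1 := HN (S N) ltac:(lia)). assert (A2 := HN N (le_n N)).
  assert (A3 := Hcontr l (Nat.iter N T c) ltac:(lra) ltac:(generalize (picard_iter_ball N); lra)).
  replace (l - T l)%C with (- (Nat.iter (S N) T c - l) - (T l - T (Nat.iter N T c)))%C by (simpl; ring).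
  eapply Rle_trans; [apply Cmod_sub_le |]. rewrite Cmod_opp. rewrite (Cmod_sub_sym l) in A3. lra.
Qed.

End Contraction.

Lemma continuity_pt_dist_on_segment (mu : R * R -> C) (c : C) (r x y t : R) :
  @continuous (prod_UniformSpace R_UniformSpace R_UniformSpace) C_UniformSpace mu ((t * x)%R, y) ->
  continuity_pt (fun s => Cmod (mu ((s * x)%R, y) - c)%C - r) t.
Proof.
  intros Hc eps He. simpl.
  destruct (proj1 (locally_R2_iff _ _) (proj1 (continuous_C_iff mu _) Hc eps He)) as [d [Hd HP]].
  exists (d / (Rabs x + 1)). split; [apply Rdiv_lt_0_compat; generalize (Rabs_pos x); lra |].
  intros s [_ Hs]. simpl in Hs. unfold R_dist in *.
  replace (Cmod (mu ((s * x)%R, y) - c)%C - r - (Cmod (mu ((t * x)%R, y) - c)%C - r))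
    with (Cmod (mu ((s * x)%R, y) - c)%C - Cmod (mu ((t * x)%R, y) - c)%C) by ring.
  eapply Rle_lt_trans; [apply Rabs_Cmod_sub_le |].
  replace (mu ((s * x)%R, y) - c - (mu ((t * x)%R, y) - c))%C
    with (mu ((s * x)%R, y) - mu ((t * x)%R, y))%C by ring.
  apply HP; simpl.
  - replace (s * x - t * x) with ((s - t) * x) by ring. rewrite Rabs_mult.
    generalize (Rabs_pos x) (Rabs_pos (s - t)). intros.
    apply Rle_lt_trans with (Rabs (s - t) * (Rabs x + 1)); [nra |].
    apply (Rmult_lt_reg_r (/ (Rabs x + 1))); [apply Rinv_0_lt_compat; lra |].
    rewrite Rmult_assoc, Rinv_r, Rmult_1_r by lra. exact Hs.
  - rewrite Rminus_eq_0, Rabs_R0. exact Hd.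
Qed.

Section ImplicitEquation.

Variables (U : C -> Prop) (f G : C -> C) (y0 rho L : R).
Hypothesis Hrho : 0 < rho.
Hypothesis HL : 0 < L.
Hypothesis HU : forall z, Cmod (z - RtoC y0)%C < rho -> U z.
Hypothesis HC : C11_estimates f G (fun z => Cmod (z - RtoC y0)%C < rho) L.

Let c0 := f (RtoC y0).
Let A := Cmod c0 + 2.

(* The size of the box is chosen so that [la |-> f (y - la x)] maps the closed unit ball
   around [f y0] into the ball of radius 1/2 and is 1/2-Lipschitz there. *)
Definition box_radius : R := Rmin (rho / (2 * A)) (1 / (2 * L * A)).

Definition box (p : R * R) : Prop := Rabs (fst p) < box_radius /\ Rabs (snd p - y0) < box_radius.

Definition eval_point (p : R * R) (la : C) : C := (RtoC (snd p) - la * RtoC (fst p))%C.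

Lemma A_ge_2 : 2 <= A.
Proof. unfold A. generalize (Cmod_ge_0 c0). lra. Qed.

Lemma box_radius_pos : 0 < box_radius.
Proof. generalize A_ge_2; intro. unfold box_radius. apply Rmin_pos; apply Rdiv_lt_0_compat; nra. Qed.

Lemma box_radius_A : box_radius * A <= rho / 2.
Proof.
  generalize A_ge_2; intro. unfold box_radius.
  eapply Rle_trans; [apply Rmult_le_compat_r; [lra | apply Rmin_l] |]. right. field. lra.
Qed.

Lemma box_radius_LA : L * box_radius * A <= 1 / 2.
Proof.
  generalize A_ge_2; intro. unfold box_radius. rewrite Rmult_assoc.
  eapply Rle_trans; [apply Rmult_le_compat_l; [lra | apply Rmult_le_compat_r; [lra | apply Rmin_r]] |].
  right. field. lra.
Qed.

Lemma box_radius_L : L * box_radius <= 1 / 4.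
Proof.
  generalize A_ge_2 box_radius_LA box_radius_pos; intros.
  assert (L * box_radius * 2 <= L * box_radius * A) by (apply Rmult_le_compat_l; nra). lra.
Qed.

Lemma box_center : box (0, y0).
Proof. unfold box. simpl. rewrite Rabs_R0, Rminus_eq_0, Rabs_R0. generalize box_radius_pos. lra. Qed.

Lemma box_open p : box p -> exists r, 0 < r /\
  forall q, Rabs (fst q - fst p) < r -> Rabs (snd q - snd p) < r -> box q.
Proof.
  intros [H1 H2]. exists (Rmin (box_radius - Rabs (fst p)) (box_radius - Rabs (snd p - y0))).
  split; [apply Rmin_pos; lra |]. intros q K1 K2.
  assert (K1' := Rlt_le_trans _ _ _ K1 (Rmin_l _ _)). assert (K2' := Rlt_le_trans _ _ _ K2 (Rmin_r _ _)).
  split.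
  - replace (fst q) with ((fst q - fst p) + fst p) by ring. eapply Rle_lt_trans; [apply Rabs_triang | lra].
  - replace (snd q - y0) with ((snd q - snd p) + (snd p - y0)) by ring.
    eapply Rle_lt_trans; [apply Rabs_triang | lra].
Qed.

Lemma eval_point_near p la : box p -> Cmod la <= A - 1 -> Cmod (eval_point p la - RtoC y0)%C < box_radius * A.
Proof.
  intros [H1 H2] Hla. unfold eval_point.
  replace (RtoC (snd p) - la * RtoC (fst p) - RtoC y0)%C with (RtoC (snd p - y0) + (- la) * RtoC (fst p))%C
    by (rewrite RtoC_minus; ring).
  eapply Rle_lt_trans; [apply Cmod_triangle |]. rewrite Cmod_mult, Cmod_opp, !Cmod_R.
  generalize (Rabs_pos (fst p)) A_ge_2. nra.
Qed.

Lemma eval_point_in_ball p la : box p -> Cmod la <= A - 1 -> Cmod (eval_point p la - RtoC y0)%C < rho.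
Proof. intros Hp Hla. generalize (eval_point_near p la Hp Hla) box_radius_A. lra. Qed.

Lemma y0_in_ball : Cmod (RtoC y0 - RtoC y0)%C < rho.
Proof. replace (RtoC y0 - RtoC y0)%C with (RtoC 0) by ring. rewrite Cmod_0. lra. Qed.

Lemma near_c0_bound la : Cmod (la - c0)%C <= 1 -> Cmod la <= A - 1.
Proof. intros H. unfold A. generalize (Cmod_sub_ge la c0). lra. Qed.

Lemma picard_maps_ball p (Hp : box p) la :
  Cmod (la - c0)%C <= 1 -> Cmod (f (eval_point p la) - c0)%C <= 1 / 2.
Proof.
  intros Hla. assert (HA := near_c0_bound la Hla).
  destruct (HC (RtoC y0) (eval_point p la) y0_in_ball (eval_point_in_ball p la Hp HA)) as (K & _).
  eapply Rle_trans; [exact K |]. generalize (eval_point_near p la Hp HA) box_radius_LA. intros.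
  apply Rle_trans with (L * (box_radius * A)); [apply Rmult_le_compat_l; lra | rewrite <- Rmult_assoc; lra].
Qed.

Lemma picard_contraction p (Hp : box p) l1 l2 : Cmod (l1 - c0)%C <= 1 -> Cmod (l2 - c0)%C <= 1 ->
  Cmod (f (eval_point p l1) - f (eval_point p l2))%C <= 1 / 2 * Cmod (l1 - l2)%C.
Proof.
  intros H1 H2.
  destruct (HC (eval_point p l2) (eval_point p l1) (eval_point_in_ball p l2 Hp (near_c0_bound _ H2))
                (eval_point_in_ball p l1 Hp (near_c0_bound _ H1))) as (K & _).
  eapply Rle_trans; [exact K |].
  replace (eval_point p l1 - eval_point p l2)%C with (- (l1 - l2) * RtoC (fst p))%C
    by (unfold eval_point; ring).
  rewrite Cmod_mult, Cmod_opp, Cmod_R.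
  generalize box_radius_L (Cmod_ge_0 (l1 - l2)%C) (Rabs_pos (fst p)). destruct Hp as [Hx _]. intros.
  assert (L * Rabs (fst p) <= L * box_radius) by (apply Rmult_le_compat_l; lra). nra.
Qed.

Lemma solution_near_c0 p : exists la, box p -> Cmod (la - c0)%C <= 1 / 2 /\ la = f (eval_point p la).
Proof.
  destruct (classic (box p)) as [Hp | Hp].
  - destruct (contraction_fixed_point (fun la => f (eval_point p la)) c0
                (picard_maps_ball p Hp) (picard_contraction p Hp)) as [la Hla].
    exists la. intros _. exact Hla.
  - exists c0. intros Hp'. contradiction.
Qed.

Definition lam (p : R * R) : C := proj1_sig (constructive_indefinite_description _ (solution_near_c0 p)).

Lemma lam_spec p : box p -> Cmod (lam p - c0)%C <= 1 / 2 /\ lam p = f (eval_point p (lam p)).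
Proof. unfold lam. destruct (constructive_indefinite_description _ _) as [la Hla]. exact Hla. Qed.

Lemma lam_unique p mu : box p -> Cmod (mu - c0)%C <= 1 -> mu = f (eval_point p mu) -> mu = lam p.
Proof.
  intros Hp H1 H2. destruct (lam_spec p Hp) as [K1 K2].
  apply (contraction_fixed_point_unique (fun la => f (eval_point p la)) c0 (picard_contraction p Hp));
    auto. lra.
Qed.

Lemma lam_bound p : box p -> Cmod (lam p) <= A - 1.
Proof. intros Hp. apply near_c0_bound. destruct (lam_spec p Hp). lra. Qed.

Lemma lam_eval_point_in_ball p : box p -> Cmod (eval_point p (lam p) - RtoC y0)%C < rho.
Proof. intros Hp. apply eval_point_in_ball; [exact Hp | apply lam_bound, Hp]. Qed.

Lemma eval_point_diff p q la la' : (eval_point q la' - eval_point p la)%C =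
  (RtoC (snd q - snd p) - (la' - la) * RtoC (fst q) - la * RtoC (fst q - fst p))%C.
Proof. unfold eval_point. rewrite !RtoC_minus. ring. Qed.

Lemma lam_lipschitz p q : box p -> box q ->
  Cmod (lam q - lam p)%C <= 2 * L * A * (Rabs (fst q - fst p) + Rabs (snd q - snd p)) /\
  Cmod (eval_point q (lam q) - eval_point p (lam p))%C
    <= 2 * A * (Rabs (fst q - fst p) + Rabs (snd q - snd p)).
Proof.
  intros Hp Hq.
  set (a := Rabs (fst q - fst p)). set (b := Rabs (snd q - snd p)). set (D := Cmod (lam q - lam p)%C).
  assert (Pa : 0 <= a) by apply Rabs_pos. assert (Pb : 0 <= b) by apply Rabs_pos.
  assert (PD : 0 <= D) by apply Cmod_ge_0.
  assert (HAp := lam_bound p Hp). generalize A_ge_2 box_radius_L box_radius_pos; intros HA HLd Hd.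
  assert (Hxq : Rabs (fst q) < box_radius) by apply Hq.
  assert (Ew : Cmod (eval_point q (lam q) - eval_point p (lam p))%C <= b + D * box_radius + (A - 1) * a).
  { rewrite eval_point_diff. eapply Rle_trans; [apply Cmod_sub_le |].
    eapply Rle_trans; [apply Rplus_le_compat_r, Cmod_sub_le |].
    rewrite !Cmod_mult, !Cmod_R. fold a b D.
    apply Rplus_le_compat; [apply Rplus_le_compat_l, Rmult_le_compat_l; lra | apply Rmult_le_compat_r; lra]. }
  destruct (HC _ _ (lam_eval_point_in_ball p Hp) (lam_eval_point_in_ball q Hq)) as (K & _).
  rewrite <- (proj2 (lam_spec p Hp)), <- (proj2 (lam_spec q Hq)) in K. fold D in K.
  assert (K2 : D <= L * b + L * box_radius * D + L * (A - 1) * a).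
  { eapply Rle_trans; [exact K |]. apply Rle_trans with (L * (b + D * box_radius + (A - 1) * a));
      [apply Rmult_le_compat_l; lra | right; ring]. }
  assert (HLdD : L * box_radius * D <= 1 / 4 * D) by (apply Rmult_le_compat_r; auto).
  assert (D3 : D <= 4 / 3 * (L * (b + (A - 1) * a))) by lra.
  assert (HbA : b + (A - 1) * a <= A * (a + b)) by nra.
  split.
  - eapply Rle_trans; [exact D3 |].
    assert (L * (b + (A - 1) * a) <= L * (A * (a + b))) by (apply Rmult_le_compat_l; lra).
    assert (0 <= L * (b + (A - 1) * a)) by (apply Rmult_le_pos; nra). nra.
  - eapply Rle_trans; [exact Ew |].
    assert (D * box_radius <= 4 / 3 * (L * box_radius) * (b + (A - 1) * a)).
    { apply Rle_trans with (4 / 3 * (L * (b + (A - 1) * a)) * box_radius);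
        [apply Rmult_le_compat_r; lra | right; ring]. }
    assert (4 / 3 * (L * box_radius) * (b + (A - 1) * a) <= 1 / 3 * (b + (A - 1) * a))
      by (apply Rmult_le_compat_r; nra).
    nra.
Qed.

(* Implicit differentiation of [lam = f (y - lam x)]: [lam_y = f' (1 - x lam_y)] and
   [lam_x = f' (- lam - x lam_x)]. *)
Definition lam_G (p : R * R) : C := G (eval_point p (lam p)).
Definition lam_den (p : R * R) : C := (1 + lam_G p * RtoC (fst p))%C.
Definition lam_dy (p : R * R) : C := (lam_G p / lam_den p)%C.
Definition lam_dx (p : R * R) : C := (- lam p * lam_dy p)%C.

Lemma lam_G_bound p : box p -> Cmod (lam_G p) <= L.
Proof.
  intros Hp. destruct (HC _ _ (lam_eval_point_in_ball p Hp) (lam_eval_point_in_ball p Hp)) as (_ & _ & K & _).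
  exact K.
Qed.

Lemma lam_den_bound p : box p -> 3 / 4 <= Cmod (lam_den p).
Proof.
  intros Hp. unfold lam_den. generalize (Cmod_sub_ge 1 (- (lam_G p * RtoC (fst p))))%C.
  replace (1 - - (lam_G p * RtoC (fst p)))%C with (1 + lam_G p * RtoC (fst p))%C by ring.
  rewrite Cmod_opp, Cmod_mult, !Cmod_R, Rabs_R1. intros.
  assert (Cmod (lam_G p) * Rabs (fst p) <= 1 / 4).
  { generalize (lam_G_bound p Hp) box_radius_L (Cmod_ge_0 (lam_G p)) (Rabs_pos (fst p)).
    destruct Hp as [Hx _]. intros. nra. }
  lra.
Qed.

Lemma lam_den_neq0 p : box p -> lam_den p <> 0%C.
Proof. intros Hp E. generalize (lam_den_bound p Hp). rewrite E, Cmod_0. lra. Qed.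

Lemma lam_dy_bound p : box p -> Cmod (lam_dy p) <= 2 * L.
Proof.
  intros Hp. unfold lam_dy. rewrite Cmod_div by (apply lam_den_neq0, Hp).
  generalize (lam_G_bound p Hp) (lam_den_bound p Hp) (Cmod_ge_0 (lam_G p)). intros.
  apply (Rmult_le_reg_r (Cmod (lam_den p))); [lra |].
  unfold Rdiv. rewrite Rmult_assoc, Rinv_l by lra. nra.
Qed.

Lemma first_order_identity (dl la g x h k : C) : (1 + g * x)%C <> 0%C ->
  (dl - k * (g / (1 + g * x)) - h * (- la * (g / (1 + g * x))))%C
  = (((dl - g * (k - dl * (x + h) - la * h)) - g * dl * h) / (1 + g * x))%C.
Proof. intros HD. field. exact HD. Qed.

Lemma lam_first_order p q : box p -> box q ->
  Cmod (lam q - lam p - RtoC (snd q - snd p) * lam_dy p - RtoC (fst q - fst p) * lam_dx p)%C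
    <= (8 * L * A * A + 4 * L * L * A) * ((Rabs (fst q - fst p) + Rabs (snd q - snd p))
                                          * (Rabs (fst q - fst p) + Rabs (snd q - snd p))).
Proof.
  intros Hp Hq.
  set (S := Rabs (fst q - fst p) + Rabs (snd q - snd p)).
  assert (PS : 0 <= S) by (unfold S; generalize (Rabs_pos (fst q - fst p)) (Rabs_pos (snd q - snd p)); lra).
  assert (Hh : Rabs (fst q - fst p) <= S) by (unfold S; generalize (Rabs_pos (snd q - snd p)); lra).
  destruct (lam_lipschitz p q Hp Hq) as [Ll Lw]. fold S in Ll, Lw.
  destruct (HC _ _ (lam_eval_point_in_ball p Hp) (lam_eval_point_in_ball q Hq)) as (_ & Taylor & _).
  rewrite <- (proj2 (lam_spec p Hp)), <- (proj2 (lam_spec q Hq)) in Taylor. fold (lam_G p) in Taylor.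
  rewrite eval_point_diff in Lw, Taylor.
  unfold lam_dx, lam_dy, lam_den.
  replace (RtoC (fst q)) with (RtoC (fst p) + RtoC (fst q - fst p))%C in Lw, Taylor
    by (rewrite RtoC_minus; ring).
  rewrite first_order_identity by (apply lam_den_neq0, Hp).
  rewrite Cmod_div by (apply lam_den_neq0, Hp). fold (lam_den p).
  generalize A_ge_2 (lam_den_bound p Hp) (lam_G_bound p Hp). intros HA HD HG.
  apply (Rmult_le_reg_r (Cmod (lam_den p))); [lra |].
  unfold Rdiv. rewrite Rmult_assoc, Rinv_l, Rmult_1_r by lra.
  eapply Rle_trans; [apply Cmod_sub_le |]. rewrite !Cmod_mult, Cmod_R.
  set (dW := Cmod (RtoC (snd q - snd p) - (lam q - lam p) * (RtoC (fst p) + RtoC (fst q - fst p))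
                   - lam p * RtoC (fst q - fst p))%C) in *.
  generalize (Cmod_ge_0 (lam q - lam p)%C) (Cmod_ge_0 (lam_G p)) (Rabs_pos (fst q - fst p)).
  assert (0 <= dW) by apply Cmod_ge_0. intros.
  assert (B1 : L * (dW * dW) <= L * (2 * A * S * (2 * A * S)))
    by (apply Rmult_le_compat_l; [lra | apply Rmult_le_compat; lra]).
  assert (B2 : Cmod (lam_G p) * Cmod (lam q - lam p) * Rabs (fst q - fst p) <= L * (2 * L * A * S) * S)
    by (apply Rmult_le_compat; [nra | lra | apply Rmult_le_compat; lra | lra]).
  assert (0 <= (4 * L * A * A + 2 * L * L * A) * (S * S)) by (apply Rmult_le_pos; nra).
  nra.
Qed.

Lemma lam_partial_x p : box p -> is_partial_x lam p (lam_dx p).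
Proof.
  intros Hp. destruct (box_open p Hp) as [r [Hr Hq]]. destruct p as [x y]. unfold is_partial_x. simpl.
  apply (is_derive_of_quadratic_remainder _ _ _ r (8 * L * A * A + 4 * L * L * A));
    [exact Hr | generalize A_ge_2; nra |].
  intros t Ht.
  assert (Hbox : box (t, y)) by (apply Hq; simpl; [exact Ht | rewrite Rminus_eq_0, Rabs_R0; exact Hr]).
  generalize (lam_first_order (x, y) (t, y) Hp Hbox). simpl.
  rewrite Rminus_eq_0, Rabs_R0, Rplus_0_r.
  replace (lam (t, y) - lam (x, y) - RtoC 0 * lam_dy (x, y) - RtoC (t - x) * lam_dx (x, y))%C
    with (lam (t, y) - lam (x, y) - RtoC (t - x) * lam_dx (x, y))%C by ring.
  easy.
Qed.

Lemma lam_partial_y p : box p -> is_partial_y lam p (lam_dy p).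
Proof.
  intros Hp. destruct (box_open p Hp) as [r [Hr Hq]]. destruct p as [x y]. unfold is_partial_y. simpl.
  apply (is_derive_of_quadratic_remainder _ _ _ r (8 * L * A * A + 4 * L * L * A));
    [exact Hr | generalize A_ge_2; nra |].
  intros t Ht.
  assert (Hbox : box (x, t)) by (apply Hq; simpl; [rewrite Rminus_eq_0, Rabs_R0; exact Hr | exact Ht]).
  generalize (lam_first_order (x, y) (x, t) Hp Hbox). simpl.
  rewrite Rminus_eq_0, Rabs_R0, Rplus_0_l.
  replace (lam (x, t) - lam (x, y) - RtoC (t - y) * lam_dy (x, y) - RtoC 0 * lam_dx (x, y))%C
    with (lam (x, t) - lam (x, y) - RtoC (t - y) * lam_dy (x, y))%C by ring.
  easy.
Qed.

Lemma continuous_in_box (F : R * R -> C) (B : R) p : box p -> 0 <= B ->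
  (forall q, box q -> Cmod (F q - F p)%C <= B * (Rabs (fst q - fst p) + Rabs (snd q - snd p))) ->
  @continuous (prod_UniformSpace R_UniformSpace R_UniformSpace) C_UniformSpace F p.
Proof.
  intros Hp HB H. destruct (box_open p Hp) as [r [Hr Hq]].
  apply (continuous_of_local_lipschitz F p r B Hr HB). intros q H1 H2. apply H, Hq; assumption.
Qed.

Lemma lam_dy_lipschitz p q : box p -> box q ->
  Cmod (lam_dy q - lam_dy p)%C <= 2 * (2 * L * A + L * L) * (Rabs (fst q - fst p) + Rabs (snd q - snd p)).
Proof.
  intros Hp Hq.
  set (S := Rabs (fst q - fst p) + Rabs (snd q - snd p)).
  assert (PS : 0 <= S) by (unfold S; generalize (Rabs_pos (fst q - fst p)) (Rabs_pos (snd q - snd p)); lra).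
  replace (lam_dy q - lam_dy p)%C
    with (((lam_G q - lam_G p) + lam_G q * lam_G p * RtoC (fst p - fst q)) / (lam_den q * lam_den p))%C
    by (unfold lam_dy, lam_den; rewrite RtoC_minus; field;
        split; [apply (lam_den_neq0 p Hp) | apply (lam_den_neq0 q Hq)]).
  rewrite Cmod_div by (apply Cmult_neq_0; apply lam_den_neq0; assumption). rewrite Cmod_mult.
  generalize (lam_den_bound p Hp) (lam_den_bound q Hq). intros D1 D2.
  assert (N : Cmod ((lam_G q - lam_G p) + lam_G q * lam_G p * RtoC (fst p - fst q))%C
              <= (2 * L * A + L * L) * S).
  { eapply Rle_trans; [apply Cmod_triangle |]. rewrite !Cmod_mult, Cmod_R.
    destruct (lam_lipschitz p q Hp Hq) as [_ Lw]. fold S in Lw.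
    destruct (HC _ _ (lam_eval_point_in_ball p Hp) (lam_eval_point_in_ball q Hq)) as (_ & _ & _ & KG).
    assert (K1 : Cmod (lam_G q - lam_G p)%C <= L * (2 * A * S))
      by (eapply Rle_trans; [exact KG | apply Rmult_le_compat_l; lra]).
    assert (K2 : Cmod (lam_G q) * Cmod (lam_G p) * Rabs (fst p - fst q) <= L * L * S).
    { generalize (lam_G_bound p Hp) (lam_G_bound q Hq) (Cmod_ge_0 (lam_G p)) (Cmod_ge_0 (lam_G q)).
      intros. rewrite Rabs_minus_sym.
      assert (Rabs (fst q - fst p) <= S) by (unfold S; generalize (Rabs_pos (snd q - snd p)); lra).
      apply Rmult_le_compat;
        [apply Rmult_le_pos; auto | apply Rabs_pos | apply Rmult_le_compat; auto | auto]. }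
    lra. }
  assert (Hd : 1 / 2 <= Cmod (lam_den q) * Cmod (lam_den p)) by nra.
  apply (Rmult_le_reg_r (Cmod (lam_den q) * Cmod (lam_den p))); [lra |].
  unfold Rdiv. rewrite Rmult_assoc, Rinv_l, Rmult_1_r by lra.
  assert (0 <= (2 * L * A + L * L) * S) by (apply Rmult_le_pos; [generalize A_ge_2; nra | auto]).
  nra.
Qed.

Theorem lam_C1 : C1_on box lam.
Proof.
  generalize A_ge_2. intros HA.
  exists lam_dx, lam_dy. intros p Hp.
  split; [apply lam_partial_x, Hp |]. split; [apply lam_partial_y, Hp |].
  split; [| split].
  - apply (continuous_in_box lam (2 * L * A)); [exact Hp | nra |].
    intros q Hq. apply (lam_lipschitz p q Hp Hq).
  - apply (continuous_in_box lam_dx (2 * L * A * (2 * L) + A * (2 * (2 * L * A + L * L))));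
      [exact Hp | nra |].
    intros q Hq. unfold lam_dx.
    replace (- lam q * lam_dy q - - lam p * lam_dy p)%C
      with (- ((lam q - lam p) * lam_dy q + lam p * (lam_dy q - lam_dy p)))%C by ring.
    rewrite Cmod_opp. eapply Rle_trans; [apply Cmod_triangle |]. rewrite !Cmod_mult.
    destruct (lam_lipschitz p q Hp Hq) as [Ll _].
    assert (K1 := lam_dy_bound q Hq). assert (K2 := lam_dy_lipschitz p q Hp Hq).
    assert (K3 := lam_bound p Hp).
    set (S := Rabs (fst q - fst p) + Rabs (snd q - snd p)) in *.
    assert (PS : 0 <= S) by (unfold S; generalize (Rabs_pos (fst q - fst p)) (Rabs_pos (snd q - snd p)); lra).
    generalize (Cmod_ge_0 (lam q - lam p)%C) (Cmod_ge_0 (lam_dy q)) (Cmod_ge_0 (lam p))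
      (Cmod_ge_0 (lam_dy q - lam_dy p)%C). intros.
    assert (Cmod (lam q - lam p)%C * Cmod (lam_dy q) <= (2 * L * A * S) * (2 * L))
      by (apply Rmult_le_compat; auto).
    assert (Cmod (lam p) * Cmod (lam_dy q - lam_dy p)%C <= A * (2 * (2 * L * A + L * L) * S))
      by (apply Rmult_le_compat; auto; lra).
    lra.
  - apply (continuous_in_box lam_dy (2 * (2 * L * A + L * L))); [exact Hp | nra |].
    intros q Hq. apply (lam_dy_lipschitz p q Hp Hq).
Qed.

Theorem lam_solves : (forall z, U z -> upper_half (f z)) -> solves_on U f box lam.
Proof.
  intros Hup p Hp.
  assert (HUp : U (eval_point p (lam p))) by apply HU, lam_eval_point_in_ball, Hp.
  destruct (lam_spec p Hp) as [_ E].
  split; [rewrite E; apply Hup, HUp | split; [exact HUp | exact E]].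
Qed.

Lemma f_near_c0 y : Rabs (y - y0) < box_radius -> Cmod (f (RtoC y) - c0)%C <= 1 / 4.
Proof.
  intros Hy. generalize box_radius_A box_radius_L A_ge_2 box_radius_pos. intros.
  assert (Hin : Cmod (RtoC y - RtoC y0)%C < rho).
  { rewrite <- RtoC_minus, Cmod_R.
    assert (box_radius * 2 <= box_radius * A) by (apply Rmult_le_compat_l; lra). lra. }
  destruct (HC (RtoC y0) (RtoC y) y0_in_ball Hin) as (K & _).
  eapply Rle_trans; [exact K |]. rewrite <- RtoC_minus, Cmod_R.
  assert (L * Rabs (y - y0) <= L * box_radius) by (apply Rmult_le_compat_l; lra). lra.
Qed.

(* At [x = 0] a continuous solution equals [f y], within 1/4 of [f y0]; wherever it is within 1
   of [f y0] it coincides with [lam], hence is within 1/2.  By the intermediate value theorem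
   along the segment from [(0, y)] to [(x, y)] it can never leave that ball. *)
Theorem solution_unique (mu : R * R -> C) :
  (forall q, box q -> @continuous (prod_UniformSpace R_UniformSpace R_UniformSpace) C_UniformSpace mu q) ->
  (forall q, box q -> mu q = f (RtoC (snd q) - mu q * RtoC (fst q))%C) ->
  forall p, box p -> mu p = lam p.
Proof.
  intros Hc Hs.
  assert (gap : forall q, box q -> Cmod (mu q - c0)%C <= 1 -> mu q = lam q /\ Cmod (mu q - c0)%C <= 1 / 2).
  { intros q Hq H. assert (E : mu q = lam q) by (apply lam_unique; auto; apply Hs, Hq).
    split; [exact E | rewrite E; apply (lam_spec q Hq)]. }
  intros [x y] Hp.
  destruct (Rle_dec (Cmod (mu (x, y) - c0)%C) 1) as [H1 | H1]; [apply gap; auto |]. exfalso.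
  assert (Hpath : forall t, 0 <= t <= 1 -> box (t * x, y)).
  { intros t Ht. destruct Hp as [K1 K2]. split; simpl; [| exact K2]. rewrite Rabs_mult.
    generalize (Rabs_pos x). intros. rewrite (Rabs_right t) by lra. simpl in K1. nra. }
  destruct (Ranalysis5.IVT_interv (fun s => Cmod (mu ((s * x)%R, y) - c0)%C - 3 / 4) 0 1) as [t [Ht E]].
  - intros a Ha. apply continuity_pt_dist_on_segment, Hc, Hpath, Ha.
  - lra.
  - assert (S0 := Hs _ (Hpath 0 ltac:(lra))). simpl in S0. rewrite Rmult_0_l in *.
    replace (RtoC y - mu (0, y) * RtoC 0)%C with (RtoC y) in S0 by ring.
    rewrite S0. destruct Hp as [_ K2]. generalize (f_near_c0 y K2). lra.
  - rewrite Rmult_1_l. lra.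
  - destruct (gap _ (Hpath t Ht) ltac:(lra)) as [_ K]. lra.
Qed.

Theorem implicit_solution (Hup : forall z, U z -> upper_half (f z)) :
  exists lam : R * R -> C, C1_on box lam /\ solves_on U f box lam /\
    forall mu, C1_on box mu -> solves_on U f box mu -> forall p, box p -> mu p = lam p.
Proof.
  exists lam. split; [exact lam_C1 | split; [exact (lam_solves Hup) |]].
  intros mu [dx [dy Hmu]] Hs. apply solution_unique.
  - intros q Hq. apply (Hmu q Hq).
  - intros q Hq. apply (Hs q Hq).
Qed.

End ImplicitEquation.

Theorem proposition2p4 (U : C -> Prop) (f : C -> C) (y0 : R)
  (hU : open U) (hf : Hol_upper U f) (hy0 : U (RtoC y0))
  (hfy0 : upper_half (f (RtoC y0))) :
  exists Om : R * R -> Prop,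
    open Om /\ Om (0%R, y0) /\
    exists lam : R * R -> C,
      C1_on Om lam /\ solves_on U f Om lam /\
      forall mu : R * R -> C,
        C1_on Om mu -> solves_on U f Om mu ->
        forall p, Om p -> mu p = lam p.
Proof.
  destruct hf as [Hhol Hup].
  destruct (holomorphic_C11_near U f (RtoC y0) hU Hhol hy0) as (rho & G & L & Hrho & HL & HU & HC).
  exists (box f y0 rho L). split; [| split].
  - intros p Hp. apply locally_R2_iff, (box_open f y0 rho L p Hp).
  - apply box_center; assumption.
  - apply (implicit_solution U f G y0 rho L); assumption.
Qed.
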